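(* With the notation of the context, the function $f:\mathbb R\times[0,\infty)\to\mathbb R$ satisfies: (i) $f(x,z)\geq x^2$ for all $x\in\mathbb R$, $z\geq 0$; (ii) $f$ is of class $C^2$ and convex; (iii) for every $x\in\mathbb R$: $x\in\bigcup_{n=1}^\infty E_n$ if and only if there exists $z\geq0$ with $f(x,z)=x^2$; (iv) for all $x\in\mathbb R$ and $z\geq0$, if $f(x,z)>x^2$ then $\frac{\partial f}{\partial z}(x,z)<0$.
   Context: Let $\phi:[0,1]\to[0,1]$ be given by: $\phi(\alpha)$ is the unique real $x$ with $2x^3+x=\frac{1-\alpha}{2-\alpha}$ (a continuous decreasing function). Let $F_1\subset F_2\subset\cdots$ be closed subsets of $[0,1]$, and put $E_n=(\mathbb R\setminus(-1,2))\cup\phi(F_n)$. Define $a_n(x)=\max(E_n\cap(-\infty,x])$ and $b_n(x)=\min(E_n\cap[x,\infty))$ for $x\in\mathbb R$. Put $g_n(x)=(x-a_n(x))^3(b_n(x)-x)^3$ and $h_n(z)=((n-z)_+)^3$, where $t_+=\max(t,0)$. Let $(c_n)$ be a sequence of positive reals with $\sum_{n=1}^\infty\frac{81^2}{6}n^3c_n<1$. Define $$f(x,z)=x^2+\sum_{n=1}^\infty c_n g_n(x)h_n(z),\qquad x\in\mathbb R,\ z\geq0.$$ *)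

From Stdlib Require Import Reals Lra Rtopology ClassicalEpsilon.
Open Scope R_scope.

(* phi(alpha) = the unique real x with 2x^3 + x = (1-alpha)/(2-alpha).
   (x |-> 2x^3+x is a strictly increasing bijection of R, so this is well defined.) *)
Definition phi (alpha : R) : R :=
  epsilon (inhabits 0) (fun x => 2 * x ^ 3 + x = (1 - alpha) / (2 - alpha)).

Definition E (F : nat -> R -> Prop) (n : nat) (x : R) : Prop :=
  x <= -1 \/ 2 <= x \/ exists alpha, F n alpha /\ x = phi alpha.

Definition a_ (F : nat -> R -> Prop) (n : nat) (x : R) : R :=
  epsilon (inhabits 0)
    (fun y => E F n y /\ y <= x /\ forall w, E F n w -> w <= x -> w <= y).

Definition b_ (F : nat -> R -> Prop) (n : nat) (x : R) : R :=
  epsilon (inhabits 0)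
    (fun y => E F n y /\ x <= y /\ forall w, E F n w -> x <= w -> y <= w).

Definition g_ (F : nat -> R -> Prop) (n : nat) (x : R) : R :=
  (x - a_ F n x) ^ 3 * (b_ F n x - x) ^ 3.

Definition h_ (n : nat) (z : R) : R := (Rmax (INR n - z) 0) ^ 3.

(* f(x,z) = x^2 + sum_{n>=1} c_n g_n(x) h_n(z)   (series indexed by k = n-1) *)
Definition f_ (F : nat -> R -> Prop) (c : nat -> R) (x z : R) : R :=
  x ^ 2 + epsilon (inhabits 0)
    (fun l => infinite_sum (fun k => c (S k) * g_ F (S k) x * h_ (S k) z) l).

Definition diff_within (u : R -> R -> R) (x z dx dz : R) : Prop :=
  forall eps, 0 < eps -> exists delta, 0 < delta /\
    forall x' z', 0 <= z' -> Rabs (x' - x) < delta -> Rabs (z' - z) < delta ->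
      Rabs (u x' z' - u x z - dx * (x' - x) - dz * (z' - z))
        <= eps * (Rabs (x' - x) + Rabs (z' - z)).

Definition cont_within (u : R -> R -> R) (x z : R) : Prop :=
  forall eps, 0 < eps -> exists delta, 0 < delta /\
    forall x' z', 0 <= z' -> Rabs (x' - x) < delta -> Rabs (z' - z) < delta ->
      Rabs (u x' z' - u x z) < eps.

(* u is of class C^2 on R x [0,oo) (derivatives one-sided at the boundary z = 0). *)
Definition C2_on_D (u : R -> R -> R) : Prop :=
  exists u1 u2 u11 u12 u21 u22 : R -> R -> R,
    forall x z, 0 <= z ->
      diff_within u x z (u1 x z) (u2 x z) /\
      diff_within u1 x z (u11 x z) (u12 x z) /\
      diff_within u2 x z (u21 x z) (u22 x z) /\
      cont_within u11 x z /\ cont_within u12 x z /\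
      cont_within u21 x z /\ cont_within u22 x z.

Definition convex_on_D (u : R -> R -> R) : Prop :=
  forall x1 z1 x2 z2 t, 0 <= z1 -> 0 <= z2 -> 0 <= t <= 1 ->
    u (t * x1 + (1 - t) * x2) (t * z1 + (1 - t) * z2)
      <= t * u x1 z1 + (1 - t) * u x2 z2.

Definition dz_within (u : R -> R -> R) (x z l : R) : Prop :=
  forall eps, 0 < eps -> exists delta, 0 < delta /\
    forall z', 0 <= z' -> Rabs (z' - z) < delta ->
      Rabs (u x z' - u x z - l * (z' - z)) <= eps * Rabs (z' - z).

(* Since F_n is closed and phi is monotone, a_n
   and b_n are attained, so g_n >= 0 vanishes exactly on E_n.  Near a point of E_n one of the
   gaps x - a_n(x), b_n(x) - x is at most the distance to that point, so g_n and g_n' vanish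
   there to the right order, while off E_n the gaps are affine; hence g_n is C^2.  Since
   g_n, g_n', g_n'' are bounded by 243 and h_n, h_n', h_n'' by 6 n^3 on z >= 0, the
   summability of c_n n^3 lets the series be differentiated twice termwise.
   Every term is nonnegative and nonincreasing in z, strictly decreasing where it is positive:
   this gives (i) and (iv).  At z = n the terms m <= n vanish through h_m and the others
   through g_m, because E_n is contained in E_m; conversely, for z < m the m-th term can only
   vanish if x is in E_m: this gives (iii).  For (ii), split x^2 = (1 - L) x^2 +
   sum_n c_n K n^3 x^2 with K = 81^2/6 and L = sum_n K n^3 c_n < 1: each
   c_n (K n^3 x^2 + g_n(x) h_n(z)) has a positive semidefinite Hessian on z >= 0. *)

From Stdlib Require Import Reals Lra Lia Rtopology ClassicalEpsilon Classical.
From Coquelicot Require Import Coquelicot.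
Open Scope R_scope.

(** * Series *)

Definition series_sum (u : nat -> R) : R := epsilon (inhabits 0) (infinite_sum u).

Lemma series_sum_spec u l : infinite_sum u l -> infinite_sum u (series_sum u).
Proof. intro H; unfold series_sum; apply epsilon_spec; now exists l. Qed.

Lemma series_sum_eq u l : infinite_sum u l -> series_sum u = l.
Proof. intro H; apply (uniqueness_sum u); [now apply (series_sum_spec _ l)| exact H]. Qed.

Lemma infinite_sum_ext u v lu lv : (forall k, u k = v k) -> lu = lv ->
  infinite_sum u lu -> infinite_sum v lv.
Proof.
  intros Huv <- H; apply is_series_Reals, (is_series_ext u); [exact Huv|].
  now apply is_series_Reals.
Qed.

Lemma infinite_sum_lin u v a b lu lv : infinite_sum u lu -> infinite_sum v lv ->
  infinite_sum (fun k => a * u k + b * v k) (a * lu + b * lv).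
Proof.
  intros Hu Hv; apply is_series_Reals in Hu, Hv.
  apply is_series_Reals; exact (is_series_plus _ _ _ _
    (is_series_scal a u lu Hu) (is_series_scal b v lv Hv)).
Qed.

Lemma infinite_sum_scal u a l : infinite_sum u l -> infinite_sum (fun k => a * u k) (a * l).
Proof.
  intro H; apply is_series_Reals in H; apply is_series_Reals.
  exact (is_series_scal a u l H).
Qed.

Lemma infinite_sum_zero : infinite_sum (fun _ => 0) 0.
Proof.
  intros eps He; exists 0%nat; intros n _; unfold Rdist.
  rewrite sum_cte, Rmult_0_l, Rminus_diag, Rabs_R0; lra.
Qed.

Lemma infinite_sum_le u v lu lv : (forall k, u k <= v k) ->
  infinite_sum u lu -> infinite_sum v lv -> lu <= lv.
Proof. intros H; apply Rle_cv_lim; intro n; now apply sum_growing. Qed.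

Lemma infinite_sum_ge_term u l k : (forall j, 0 <= u j) -> infinite_sum u l -> u k <= l.
Proof.
  intros Hpos Hu; apply Rle_trans with (sum_f_R0 u k); [|now apply sum_incr].
  destruct k as [|k]; simpl; [lra|]; pose proof (cond_pos_sum u k Hpos); lra.
Qed.

Lemma infinite_sum_dominated u v lv : (forall k, Rabs (u k) <= v k) -> infinite_sum v lv ->
  infinite_sum u (series_sum u).
Proof.
  intros Huv Hv; apply (series_sum_spec _ (Series u)), is_series_Reals, Series_correct.
  apply (ex_series_le u v); [exact Huv|]; exists lv; now apply is_series_Reals.
Qed.

Lemma infinite_sum_tail_small u l eps : infinite_sum u l -> 0 < eps ->
  exists N, l - sum_f_R0 u N < eps.
Proof.
  intros Hu He; destruct (Hu eps He) as [N HN]; exists N.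
  specialize (HN N (le_n _)); unfold Rdist in HN; rewrite Rabs_minus_sym in HN.
  pose proof (Rle_abs (l - sum_f_R0 u N)); lra.
Qed.

Lemma sum_f_R0_abs_le u N C : (forall k, (k <= N)%nat -> Rabs (u k) <= C) ->
  Rabs (sum_f_R0 u N) <= (INR N + 1) * C.
Proof.
  induction N as [|N IH]; intro H; cbn [sum_f_R0].
  - rewrite Rplus_0_l, Rmult_1_l; apply H; lia.
  - rewrite S_INR; eapply Rle_trans; [apply Rabs_triang|].
    specialize (IH (fun k Hk => H k ltac:(lia))); specialize (H (S N) (le_n _)); lra.
Qed.

Lemma infinite_sum_abs_le_head_tail u m lu lm N C :
  infinite_sum u lu -> infinite_sum m lm -> (forall k, Rabs (u k) <= m k) ->
  (forall k, (k <= N)%nat -> Rabs (u k) <= C) ->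
  Rabs lu <= (INR N + 1) * C + (lm - sum_f_R0 m N).
Proof.
  intros Hu Hm Hum Hhead.
  pose proof (sum_maj1 (fun k _ => u k) m 0 lu lm N Hu Hm (fun k => Hum k)) as Htail.
  pose proof (sum_f_R0_abs_le u N C Hhead) as H.
  change (SP (fun k _ => u k) N 0) with (sum_f_R0 u N) in Htail.
  pose proof (Rabs_triang (lu - sum_f_R0 u N) (sum_f_R0 u N)) as Htri.
  replace (lu - sum_f_R0 u N + sum_f_R0 u N) with lu in Htri by ring; lra.
Qed.

(** * Functions of one real variable *)

Lemma derivable_pt_lim_eps f x l : derivable_pt_lim f x l -> forall e, 0 < e ->
  exists d, 0 < d /\ forall y, Rabs (y - x) < d ->
    Rabs (f y - f x - l * (y - x)) <= e * Rabs (y - x).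
Proof.
  intros H e He; destruct (H e He) as [d Hd]; exists d; split; [apply cond_pos|].
  intros y Hy; destruct (Req_dec y x) as [->|Hne].
  - rewrite !Rminus_diag, Rmult_0_r, Rminus_0_r, Rabs_R0; lra.
  - specialize (Hd (y - x) ltac:(lra) Hy); replace (x + (y - x)) with y in Hd by ring.
    replace (f y - f x - l * (y - x)) with (((f y - f x) / (y - x) - l) * (y - x))
      by (field; lra).
    rewrite Rabs_mult; apply Rmult_le_compat_r; [apply Rabs_pos | lra].
Qed.

Lemma continuity_pt_eps f x : continuity_pt f x -> forall e, 0 < e ->
  exists d, 0 < d /\ forall y, Rabs (y - x) < d -> Rabs (f y - f x) < e.
Proof.
  intros H e He; destruct (proj1 (continuity_pt_locally f x) H (mkposreal e He)) as [d Hd].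
  exists d; split; [apply cond_pos|]; intros y Hy; exact (Hd y Hy).
Qed.

Lemma derivable_pt_lim_continuity_pt f x l : derivable_pt_lim f x l -> continuity_pt f x.
Proof. intro H; apply derivable_continuous_pt; now exists l. Qed.

Lemma derivable_pt_lim_flat f x C : f x = 0 ->
  (forall y, Rabs (y - x) < 1 -> Rabs (f y) <= C * (y - x) ^ 2) -> derivable_pt_lim f x 0.
Proof.
  intros Hx Hb e He; pose proof (Rabs_pos C) as HC; pose proof (Rle_abs C).
  assert (Hd : 0 < Rmin 1 (e / (Rabs C + 1)))
    by (apply Rmin_pos; [lra | apply Rdiv_lt_0_compat; lra]).
  exists (mkposreal _ Hd); intros h Hh Hlt; simpl in Hlt.
  assert (h1 : Rabs h < 1) by (eapply Rlt_le_trans; [exact Hlt | apply Rmin_l]).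
  assert (h2 : Rabs h * (Rabs C + 1) < e).
  { apply Rlt_le_trans with (e / (Rabs C + 1) * (Rabs C + 1)); [|right; field; lra].
    apply Rmult_lt_compat_r; [lra|]; eapply Rlt_le_trans; [exact Hlt | apply Rmin_r]. }
  specialize (Hb (x + h)); replace (x + h - x) with h in Hb by ring; specialize (Hb h1).
  rewrite Hx, !Rminus_0_r; unfold Rdiv; rewrite Rabs_mult, Rabs_inv.
  assert (Hah : 0 < Rabs h) by now apply Rabs_pos_lt.
  rewrite <- (pow2_abs h) in Hb.
  apply Rmult_lt_reg_r with (Rabs h); [exact Hah|].
  rewrite Rmult_assoc, Rinv_l, Rmult_1_r by lra; nra.
Qed.

Lemma continuity_pt_local_lipschitz f x C :
  (forall y, Rabs (y - x) < 1 -> Rabs (f y - f x) <= C * Rabs (y - x)) -> continuity_pt f x.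
Proof.
  intro Hb; apply continuity_pt_locally; intro e; pose proof (cond_pos e) as He.
  pose proof (Rabs_pos C) as HC; pose proof (Rle_abs C).
  assert (Hd : 0 < Rmin 1 (e / (Rabs C + 1)))
    by (apply Rmin_pos; [lra | apply Rdiv_lt_0_compat; lra]).
  exists (mkposreal _ Hd); intros y Hy; change (Rabs (y - x) < Rmin 1 (e / (Rabs C + 1))) in Hy.
  assert (h1 : Rabs (y - x) < 1) by (eapply Rlt_le_trans; [exact Hy | apply Rmin_l]).
  assert (h2 : Rabs (y - x) * (Rabs C + 1) < e).
  { apply Rlt_le_trans with (e / (Rabs C + 1) * (Rabs C + 1)); [|right; field; lra].
    apply Rmult_lt_compat_r; [lra|]; eapply Rlt_le_trans; [exact Hy | apply Rmin_r]. }
  specialize (Hb y h1); pose proof (Rabs_pos (y - x)); nra.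
Qed.

Lemma Rabs_sub_le_of_deriv_bound f f' a b M : (forall y, derivable_pt_lim f y (f' y)) ->
  (forall y, Rmin a b <= y <= Rmax a b -> Rabs (f' y) <= M) ->
  Rabs (f b - f a) <= M * Rabs (b - a).
Proof.
  intros Hd Hb; destruct (Rle_or_lt a b) as [[Hlt | ->] | Hgt].
  - destruct (MVT_cor2 f f' a b Hlt (fun c _ => Hd c)) as [c [-> Hc]].
    rewrite Rabs_mult; apply Rmult_le_compat_r; [apply Rabs_pos|].
    apply Hb; rewrite Rmin_left, Rmax_right; lra.
  - rewrite !Rminus_diag, !Rabs_R0, Rmult_0_r; lra.
  - destruct (MVT_cor2 f f' b a Hgt (fun c _ => Hd c)) as [c [Hfc Hc]].
    rewrite Rabs_minus_sym, Hfc, (Rabs_minus_sym b), Rabs_mult.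
    apply Rmult_le_compat_r; [apply Rabs_pos|].
    apply Hb; rewrite Rmin_right, Rmax_left; lra.
Qed.

Lemma convex_of_second_derivative_nonneg psi psi1 psi2 :
  (forall t, derivable_pt_lim psi t (psi1 t)) -> (forall t, derivable_pt_lim psi1 t (psi2 t)) ->
  (forall t, 0 <= t <= 1 -> 0 <= psi2 t) ->
  forall t, 0 <= t <= 1 -> psi t <= t * psi 1 + (1 - t) * psi 0.
Proof.
  intros D1 D2 Hpos t Ht.
  destruct (Req_dec t 0) as [->|H0]; [lra|]; destruct (Req_dec t 1) as [->|H1]; [lra|].
  destruct (MVT_cor2 psi psi1 0 t ltac:(lra) (fun c _ => D1 c)) as [a [Ha Har]].
  destruct (MVT_cor2 psi psi1 t 1 ltac:(lra) (fun c _ => D1 c)) as [b [Hb Hbr]].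
  destruct (MVT_cor2 psi1 psi2 a b ltac:(lra) (fun c _ => D2 c)) as [e [He Her]].
  assert (0 <= psi2 e) by (apply Hpos; lra).
  assert (psi1 a <= psi1 b) by nra.
  assert (t * (1 - t) * psi1 a <= t * (1 - t) * psi1 b) by (apply Rmult_le_compat_l; nra).
  nra.
Qed.

Lemma finite_delta (P : nat -> R -> Prop) N :
  (forall k d d', 0 < d' <= d -> P k d -> P k d') ->
  (forall k, (k <= N)%nat -> exists d, 0 < d /\ P k d) ->
  exists d, 0 < d /\ forall k, (k <= N)%nat -> P k d.
Proof.
  intros Hmono; induction N as [|N IH]; intro H.
  - destruct (H 0%nat (le_n _)) as [d [Hd Hp]]; exists d; split; [exact Hd|].
    intros k Hk; replace k with 0%nat by lia; exact Hp.
  - destruct IH as [d1 [Hd1 Hp1]]; [intros k Hk; apply H; lia|].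
    destruct (H (S N) (le_n _)) as [d2 [Hd2 Hp2]].
    assert (Hm : 0 < Rmin d1 d2) by now apply Rmin_pos.
    exists (Rmin d1 d2); split; [exact Hm|]; intros k Hk.
    destruct (Nat.eq_dec k (S N)) as [->|Hne].
    + apply Hmono with d2; [split; [exact Hm | apply Rmin_r] | exact Hp2].
    + apply Hmono with d1; [split; [exact Hm | apply Rmin_l] | apply Hp1; lia].
Qed.

(** * Series of products A_k(x) B_k(z) *)

Lemma Rabs_mult_le u v p q : Rabs u <= p -> Rabs v <= q -> Rabs (u * v) <= p * q.
Proof.
  intros Hu Hv; rewrite Rabs_mult.
  apply Rmult_le_compat; [apply Rabs_pos | apply Rabs_pos | exact Hu | exact Hv].
Qed.

Lemma continuity_pt_near f z e : continuity_pt f z -> 0 < e ->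
  exists d, 0 < d /\ forall z', Rabs (z' - z) < d ->
    Rabs (f z' - f z) <= e /\ Rabs (f z') <= Rabs (f z) + e.
Proof.
  intros Hf He; destruct (continuity_pt_eps f z Hf e He) as [d [Hd H]].
  exists d; split; [exact Hd|].
  intros z' Hz; specialize (H z' Hz); split; [lra|].
  replace (f z') with (f z + (f z' - f z)) by ring.
  pose proof (Rabs_triang (f z) (f z' - f z)); lra.
Qed.

Lemma product_frechet A B a' b' x z : derivable_pt_lim A x a' -> derivable_pt_lim B z b' ->
  forall e, 0 < e -> exists d, 0 < d /\ forall x' z', Rabs (x' - x) < d -> Rabs (z' - z) < d ->
    Rabs (A x' * B z' - A x * B z - a' * B z * (x' - x) - A x * b' * (z' - z))
      <= e * (Rabs (x' - x) + Rabs (z' - z)).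
Proof.
  intros HA HB e He.
  set (KB := Rabs (B z) + 1); set (Ka := Rabs a' + 1); set (KA := Rabs (A x) + 1).
  assert (HKB : 0 < KB) by (unfold KB; pose proof (Rabs_pos (B z)); lra).
  assert (HKa : 0 < Ka) by (unfold Ka; pose proof (Rabs_pos a'); lra).
  assert (HKA : 0 < KA) by (unfold KA; pose proof (Rabs_pos (A x)); lra).
  destruct (derivable_pt_lim_eps A x a' HA (e / (2 * KB))) as [d1 [Hd1 H1]];
    [apply Rdiv_lt_0_compat; lra|].
  destruct (derivable_pt_lim_eps B z b' HB (e / KA)) as [d2 [Hd2 H2]];
    [apply Rdiv_lt_0_compat; lra|].
  destruct (continuity_pt_near B z (Rmin 1 (e / (2 * Ka)))
    (derivable_pt_lim_continuity_pt B z b' HB))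
    as [d3 [Hd3 H3]]; [apply Rmin_pos; [lra | apply Rdiv_lt_0_compat; lra]|].
  exists (Rmin d1 (Rmin d2 d3)); split; [repeat apply Rmin_pos; assumption|].
  intros x' z' Hx Hz.
  pose proof (Rmin_l d1 (Rmin d2 d3)); pose proof (Rmin_r d1 (Rmin d2 d3)).
  pose proof (Rmin_l d2 d3); pose proof (Rmin_r d2 d3).
  pose proof (Rmin_l 1 (e / (2 * Ka))); pose proof (Rmin_r 1 (e / (2 * Ka))).
  specialize (H1 x' ltac:(lra)); specialize (H2 z' ltac:(lra)).
  destruct (H3 z' ltac:(lra)) as [H3a H3b].
  set (dx := Rabs (x' - x)) in *; set (dz := Rabs (z' - z)) in *.
  assert (T1 : Rabs ((A x' - A x - a' * (x' - x)) * B z') <= e / 2 * dx).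
  { apply Rle_trans with (e / (2 * KB) * dx * KB);
      [apply Rabs_mult_le; [exact H1 | unfold KB; lra] | right; field; lra]. }
  assert (T2 : Rabs (a' * (x' - x) * (B z' - B z)) <= e / 2 * dx).
  { apply Rle_trans with (Ka * dx * (e / (2 * Ka))); [|right; field; lra].
    apply Rabs_mult_le; [rewrite Rabs_mult; apply Rmult_le_compat_r;
      [apply Rabs_pos | unfold Ka; lra] | lra]. }
  assert (T3 : Rabs (A x * (B z' - B z - b' * (z' - z))) <= e * dz).
  { apply Rle_trans with (KA * (e / KA * dz));
      [apply Rabs_mult_le; [unfold KA; lra | exact H2] | right; field; lra]. }
  replace (A x' * B z' - A x * B z - a' * B z * (x' - x) - A x * b' * (z' - z)) with
    ((A x' - A x - a' * (x' - x)) * B z' + a' * (x' - x) * (B z' - B z)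
     + A x * (B z' - B z - b' * (z' - z))) by ring.
  pose proof (Rabs_triang ((A x' - A x - a' * (x' - x)) * B z' + a' * (x' - x) * (B z' - B z))
    (A x * (B z' - B z - b' * (z' - z)))).
  pose proof (Rabs_triang ((A x' - A x - a' * (x' - x)) * B z') (a' * (x' - x) * (B z' - B z))).
  lra.
Qed.

Lemma product_continuity A B x z : continuity_pt A x -> continuity_pt B z ->
  forall e, 0 < e -> exists d, 0 < d /\ forall x' z', Rabs (x' - x) < d -> Rabs (z' - z) < d ->
    Rabs (A x' * B z' - A x * B z) <= e.
Proof.
  intros HA HB e He.
  set (KB := Rabs (B z) + 1); set (KA := Rabs (A x) + 1).
  assert (HKB : 0 < KB) by (unfold KB; pose proof (Rabs_pos (B z)); lra).
  assert (HKA : 0 < KA) by (unfold KA; pose proof (Rabs_pos (A x)); lra).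
  destruct (continuity_pt_near A x (e / (2 * KB)) HA) as [d1 [Hd1 H1]];
    [apply Rdiv_lt_0_compat; lra|].
  destruct (continuity_pt_near B z (Rmin 1 (e / (2 * KA))) HB) as [d2 [Hd2 H2]];
    [apply Rmin_pos; [lra | apply Rdiv_lt_0_compat; lra]|].
  exists (Rmin d1 d2); split; [now apply Rmin_pos|]; intros x' z' Hx Hz.
  pose proof (Rmin_l d1 d2); pose proof (Rmin_r d1 d2).
  pose proof (Rmin_l 1 (e / (2 * KA))); pose proof (Rmin_r 1 (e / (2 * KA))).
  destruct (H1 x' ltac:(lra)) as [H1a _]; destruct (H2 z' ltac:(lra)) as [H2a H2b].
  assert (T1 : Rabs ((A x' - A x) * B z') <= e / 2).
  { apply Rle_trans with (e / (2 * KB) * KB);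
      [apply Rabs_mult_le; [exact H1a | unfold KB; lra] | right; field; lra]. }
  assert (T2 : Rabs (A x * (B z' - B z)) <= e / 2).
  { apply Rle_trans with (KA * (e / (2 * KA)));
      [apply Rabs_mult_le; [unfold KA; lra | lra] | right; field; lra]. }
  replace (A x' * B z' - A x * B z) with ((A x' - A x) * B z' + A x * (B z' - B z)) by ring.
  pose proof (Rabs_triang ((A x' - A x) * B z') (A x * (B z' - B z))); lra.
Qed.

Lemma Rabs_triang4 a b c d : Rabs (a + b - c - d) <= Rabs a + Rabs b + Rabs c + Rabs d.
Proof.
  pose proof (Rabs_triang a b); pose proof (Rabs_triang (a + b) (- c));
  pose proof (Rabs_triang (a + b - c) (- d)); rewrite Rabs_Ropp in *; unfold Rminus in *; lra.
Qed.

Lemma product_increment_bound A A' B B' a b x z x' z' :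
  (forall y, derivable_pt_lim A y (A' y)) -> (forall y, derivable_pt_lim B y (B' y)) ->
  (forall y, Rabs (A y) <= a) -> (forall y, Rabs (A' y) <= a) ->
  (forall y, 0 <= y -> Rabs (B y) <= b) -> (forall y, 0 <= y -> Rabs (B' y) <= b) ->
  0 <= z -> 0 <= z' ->
  Rabs (A x' * B z' - A x * B z - A' x * B z * (x' - x) - A x * B' z * (z' - z))
    <= a * b * (2 * (Rabs (x' - x) + Rabs (z' - z))).
Proof.
  intros HA HB HAb HA'b HBb HB'b Hz Hz'.
  assert (Ha : 0 <= a) by (eapply Rle_trans; [apply Rabs_pos | apply (HAb 0)]).
  assert (Hb : 0 <= b) by (eapply Rle_trans; [apply Rabs_pos | apply (HBb 0); lra]).
  assert (LA : Rabs (A x' - A x) <= a * Rabs (x' - x))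
    by (apply Rabs_sub_le_of_deriv_bound with A'; auto).
  assert (LB : Rabs (B z' - B z) <= b * Rabs (z' - z)).
  { apply Rabs_sub_le_of_deriv_bound with B'; [exact HB|].
    intros y Hy; apply HB'b; pose proof (Rmin_glb z z' 0); lra. }
  pose proof (Rabs_mult_le _ _ _ _ LA (HBb z' Hz')).
  pose proof (Rabs_mult_le _ _ _ _ (HAb x) LB).
  pose proof (Rabs_mult_le _ _ _ _ (Rabs_mult_le _ _ _ _ (HA'b x) (HBb z Hz))
    (Rle_refl (Rabs (x' - x)))).
  pose proof (Rabs_mult_le _ _ _ _ (Rabs_mult_le _ _ _ _ (HAb x) (HB'b z Hz))
    (Rle_refl (Rabs (z' - z)))).
  pose proof (Rabs_triang4 ((A x' - A x) * B z') (A x * (B z' - B z))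
    (A' x * B z * (x' - x)) (A x * B' z * (z' - z))).
  replace (A x' * B z' - A x * B z - A' x * B z * (x' - x) - A x * B' z * (z' - z))
    with ((A x' - A x) * B z' + A x * (B z' - B z) - A' x * B z * (x' - x)
      - A x * B' z * (z' - z)) by ring.
  pose proof (Rmult_le_pos _ _ Ha Hb).
  pose proof (Rabs_pos (x' - x)); pose proof (Rabs_pos (z' - z)).
  nra.
Qed.

Definition sep_series (A B : nat -> R -> R) (x z : R) : R :=
  series_sum (fun k => A k x * B k z).

Section SeparableSeries.
Variables (al be : nat -> R) (lab : R).
Hypothesis Hlab : infinite_sum (fun k => al k * be k) lab.

Lemma sep_series_spec (A B : nat -> R -> R) x z :
  (forall k, Rabs (A k x) <= al k) -> (forall k, Rabs (B k z) <= be k) ->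
  infinite_sum (fun k => A k x * B k z) (sep_series A B x z).
Proof.
  intros HA HB; apply (infinite_sum_dominated _ (fun k => al k * be k) lab); [|exact Hlab].
  intro k; now apply Rabs_mult_le.
Qed.

Lemma sep_series_increment (A A' B B' : nat -> R -> R) x z x' z' :
  (forall k y, Rabs (A k y) <= al k) -> (forall k y, Rabs (A' k y) <= al k) ->
  (forall k y, 0 <= y -> Rabs (B k y) <= be k) -> (forall k y, 0 <= y -> Rabs (B' k y) <= be k) ->
  0 <= z -> 0 <= z' ->
  infinite_sum (fun k => A k x' * B k z' - A k x * B k z
                          - A' k x * B k z * (x' - x) - A k x * B' k z * (z' - z))
    (sep_series A B x' z' - sep_series A B x z
     - sep_series A' B x z * (x' - x) - sep_series A B' x z * (z' - z)).
Proof.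
  intros HAb HA'b HBb HB'b Hz Hz'.
  pose proof (infinite_sum_lin _ _ 1 (-1) _ _
    (sep_series_spec A B x' z' (fun k => HAb k x') (fun k => HBb k z' Hz'))
    (sep_series_spec A B x z (fun k => HAb k x) (fun k => HBb k z Hz))) as L1.
  pose proof (infinite_sum_lin _ _ (x' - x) (z' - z) _ _
    (sep_series_spec A' B x z (fun k => HA'b k x) (fun k => HBb k z Hz))
    (sep_series_spec A B' x z (fun k => HAb k x) (fun k => HB'b k z Hz))) as L2.
  refine (infinite_sum_ext _ _ _ _ _ _ (infinite_sum_lin _ _ 1 (-1) _ _ L1 L2)); intros; ring.
Qed.

(* Finitely many terms are linearized with a common delta; by the mean value theorem each
   remainder term is at most 2 al_k be_k (|x' - x| + |z' - z|), which controls the tail. *)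
Lemma sep_series_diff (A A' B B' : nat -> R -> R) x z :
  (forall k y, derivable_pt_lim (A k) y (A' k y)) ->
  (forall k y, derivable_pt_lim (B k) y (B' k y)) ->
  (forall k y, Rabs (A k y) <= al k) -> (forall k y, Rabs (A' k y) <= al k) ->
  (forall k y, 0 <= y -> Rabs (B k y) <= be k) -> (forall k y, 0 <= y -> Rabs (B' k y) <= be k) ->
  0 <= z -> diff_within (sep_series A B) x z (sep_series A' B x z) (sep_series A B' x z).
Proof.
  intros HA HB HAb HA'b HBb HB'b Hz eps He.
  destruct (infinite_sum_tail_small _ _ (eps / 8) Hlab ltac:(lra)) as [N HN].
  set (c := eps / (2 * (INR N + 1))).
  assert (Hc : 0 < c) by (unfold c; apply Rdiv_lt_0_compat; [lra | pose proof (pos_INR N); lra]).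
  destruct (finite_delta (fun k d => forall x' z', Rabs (x' - x) < d -> Rabs (z' - z) < d ->
     Rabs (A k x' * B k z' - A k x * B k z - A' k x * B k z * (x' - x) - A k x * B' k z * (z' - z))
     <= c * (Rabs (x' - x) + Rabs (z' - z))) N) as [d [Hd Hdk]].
  { intros k d d' Hdd Hp x' z' H1 H2; apply Hp; lra. }
  { intros k _; exact (product_frechet (A k) (B k) _ _ x z (HA k x) (HB k z) c Hc). }
  exists d; split; [exact Hd|]; intros x' z' Hz' Hx Hzd.
  set (w := 2 * (Rabs (x' - x) + Rabs (z' - z))).
  pose proof (sep_series_increment A A' B B' x z x' z' HAb HA'b HBb HB'b Hz Hz') as Hse.
  assert (Hm : infinite_sum (fun k => al k * be k * w) (lab * w)).
  { refine (infinite_sum_ext _ _ _ _ _ _ (infinite_sum_scal _ w _ Hlab)); intros; ring. }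
  pose proof (infinite_sum_abs_le_head_tail _ _ _ _ N (c * (Rabs (x' - x) + Rabs (z' - z))) Hse Hm
    (fun k => product_increment_bound _ _ _ _ _ _ x z x' z' (HA k) (HB k) (HAb k) (HA'b k)
      (HBb k) (HB'b k) Hz Hz')
    (fun k Hk => Hdk k Hk x' z' Hx Hzd)) as Hbound.
  rewrite <- scal_sum in Hbound.
  replace ((INR N + 1) * (c * (Rabs (x' - x) + Rabs (z' - z))))
    with (eps / 2 * (Rabs (x' - x) + Rabs (z' - z))) in Hbound
    by (unfold c; field; pose proof (pos_INR N); lra).
  assert (Hw : 0 <= w)
    by (unfold w; pose proof (Rabs_pos (x' - x)); pose proof (Rabs_pos (z' - z)); lra).
  assert (w * (lab - sum_f_R0 (fun k => al k * be k) N) <= w * (eps / 8))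
    by (apply Rmult_le_compat_l; lra).
  unfold w in *; nra.
Qed.

Lemma sep_series_cont (A B : nat -> R -> R) x z :
  (forall k y, continuity_pt (A k) y) -> (forall k y, continuity_pt (B k) y) ->
  (forall k y, Rabs (A k y) <= al k) -> (forall k y, 0 <= y -> Rabs (B k y) <= be k) ->
  0 <= z -> cont_within (sep_series A B) x z.
Proof.
  intros HA HB HAb HBb Hz eps He.
  destruct (infinite_sum_tail_small _ _ (eps / 8) Hlab ltac:(lra)) as [N HN].
  set (c := eps / (2 * (INR N + 1))).
  assert (Hc : 0 < c) by (unfold c; apply Rdiv_lt_0_compat; [lra | pose proof (pos_INR N); lra]).
  destruct (finite_delta (fun k d => forall x' z', Rabs (x' - x) < d -> Rabs (z' - z) < d ->
     Rabs (A k x' * B k z' - A k x * B k z) <= c) N) as [d [Hd Hdk]].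
  { intros k d d' Hdd Hp x' z' H1 H2; apply Hp; lra. }
  { intros k _; exact (product_continuity (A k) (B k) x z (HA k x) (HB k z) c Hc). }
  exists d; split; [exact Hd|]; intros x' z' Hz' Hx Hzd.
  set (e := fun k => A k x' * B k z' - A k x * B k z).
  assert (Hse : infinite_sum e (sep_series A B x' z' - sep_series A B x z)).
  { pose proof (infinite_sum_lin _ _ 1 (-1) _ _
      (sep_series_spec A B x' z' (fun k => HAb k x') (fun k => HBb k z' Hz'))
      (sep_series_spec A B x z (fun k => HAb k x) (fun k => HBb k z Hz))) as L.
    refine (infinite_sum_ext _ _ _ _ _ _ L); [intro k; unfold e; ring | ring]. }
  assert (Heb : forall k, Rabs (e k) <= al k * be k * 2).
  { intro k; unfold e.
    pose proof (Rabs_mult_le _ _ _ _ (HAb k x') (HBb k z' Hz')).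
    pose proof (Rabs_mult_le _ _ _ _ (HAb k x) (HBb k z Hz)).
    pose proof (Rabs_triang (A k x' * B k z') (- (A k x * B k z))).
    rewrite Rabs_Ropp in *; unfold Rminus; lra. }
  assert (Hm : infinite_sum (fun k => al k * be k * 2) (lab * 2)).
  { refine (infinite_sum_ext _ _ _ _ _ _ (infinite_sum_scal _ 2 _ Hlab)); intros; ring. }
  pose proof (infinite_sum_abs_le_head_tail e _ _ _ N c Hse Hm Heb
    (fun k Hk => Hdk k Hk x' z' Hx Hzd)) as Hbound.
  rewrite <- scal_sum in Hbound.
  replace ((INR N + 1) * c) with (eps / 2) in Hbound
    by (unfold c; field; pose proof (pos_INR N); lra).
  lra.
Qed.
End SeparableSeries.

(** * Convexity on R x [0, +oo) *)

Definition lerp (a b t : R) : R := t * a + (1 - t) * b.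

Lemma lerp_product_derivative P P' Q Q' x1 x2 z1 z2 t :
  (forall y, derivable_pt_lim P y (P' y)) -> (forall y, derivable_pt_lim Q y (Q' y)) ->
  derivable_pt_lim (fun t => P (lerp x1 x2 t) * Q (lerp z1 z2 t)) t
    ((x1 - x2) * P' (lerp x1 x2 t) * Q (lerp z1 z2 t)
     + (z1 - z2) * P (lerp x1 x2 t) * Q' (lerp z1 z2 t)).
Proof.
  intros HP HQ.
  assert (Hlerp : forall a b, derivable_pt_lim (lerp a b) t (a - b))
    by (intros a b; apply is_derive_Reals; unfold lerp; auto_derive; [trivial | ring]).
  pose proof (derivable_pt_lim_mult _ _ t _ _
    (derivable_pt_lim_comp (lerp x1 x2) P t _ _ (Hlerp x1 x2) (HP _))
    (derivable_pt_lim_comp (lerp z1 z2) Q t _ _ (Hlerp z1 z2) (HQ _))) as H.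
  unfold mult_fct, comp in H; cbv beta in H.
  match type of H with derivable_pt_lim _ _ ?l => replace (_ + _) with l by ring end.
  exact H.
Qed.

Lemma lerp_0 a b : lerp a b 0 = b.
Proof. unfold lerp; ring. Qed.

Lemma lerp_1 a b : lerp a b 1 = a.
Proof. unfold lerp; ring. Qed.

Lemma scaled_derivative (f f' : R -> R) a :
  (forall y, derivable_pt_lim f y (f' y)) ->
  forall y, derivable_pt_lim (fun y => a * f y) y (a * f' y).
Proof. intros Hf y; exact (derivable_pt_lim_scal f a y _ (Hf y)). Qed.

Section SeparableConvexity.
Variables P P1 P2 Q Q1 Q2 U U1 U2 V V1 V2 : R -> R.
Hypothesis HP : forall y, derivable_pt_lim P y (P1 y).
Hypothesis HP1 : forall y, derivable_pt_lim P1 y (P2 y).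
Hypothesis HQ : forall y, derivable_pt_lim Q y (Q1 y).
Hypothesis HQ1 : forall y, derivable_pt_lim Q1 y (Q2 y).
Hypothesis HU : forall y, derivable_pt_lim U y (U1 y).
Hypothesis HU1 : forall y, derivable_pt_lim U1 y (U2 y).
Hypothesis HV : forall y, derivable_pt_lim V y (V1 y).
Hypothesis HV1 : forall y, derivable_pt_lim V1 y (V2 y).

Lemma separable_sum_convex :
  (forall x z X Y, 0 <= z ->
    0 <= X ^ 2 * (P2 x * Q z + U2 x * V z) + 2 * X * Y * (P1 x * Q1 z + U1 x * V1 z)
         + Y ^ 2 * (P x * Q2 z + U x * V2 z)) ->
  convex_on_D (fun x z => P x * Q z + U x * V z).
Proof.
  intros Hess x1 z1 x2 z2 t Hz1 Hz2 Ht; set (X := x1 - x2); set (Y := z1 - z2).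
  set (psi := fun s => P (lerp x1 x2 s) * Q (lerp z1 z2 s) + U (lerp x1 x2 s) * V (lerp z1 z2 s)).
  set (psi1 := fun s =>
    (X * P1 (lerp x1 x2 s) * Q (lerp z1 z2 s) + Y * P (lerp x1 x2 s) * Q1 (lerp z1 z2 s))
    + (X * U1 (lerp x1 x2 s) * V (lerp z1 z2 s) + Y * U (lerp x1 x2 s) * V1 (lerp z1 z2 s))).
  set (psi2 := fun s =>
    X ^ 2 * (P2 (lerp x1 x2 s) * Q (lerp z1 z2 s) + U2 (lerp x1 x2 s) * V (lerp z1 z2 s))
    + 2 * X * Y * (P1 (lerp x1 x2 s) * Q1 (lerp z1 z2 s) + U1 (lerp x1 x2 s) * V1 (lerp z1 z2 s))
    + Y ^ 2 * (P (lerp x1 x2 s) * Q2 (lerp z1 z2 s) + U (lerp x1 x2 s) * V2 (lerp z1 z2 s))).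
  assert (D1 : forall s, derivable_pt_lim psi s (psi1 s)).
  { intro s; exact (derivable_pt_lim_plus _ _ s _ _
      (lerp_product_derivative P P1 Q Q1 x1 x2 z1 z2 s HP HQ)
      (lerp_product_derivative U U1 V V1 x1 x2 z1 z2 s HU HV)). }
  assert (D2 : forall s, derivable_pt_lim psi1 s (psi2 s)).
  { intro s; pose proof (derivable_pt_lim_plus _ _ s _ _
      (derivable_pt_lim_plus _ _ s _ _
        (lerp_product_derivative _ _ Q Q1 x1 x2 z1 z2 s (scaled_derivative P1 P2 X HP1) HQ)
        (lerp_product_derivative _ _ Q1 Q2 x1 x2 z1 z2 s (scaled_derivative P P1 Y HP) HQ1))
      (derivable_pt_lim_plus _ _ s _ _
        (lerp_product_derivative _ _ V V1 x1 x2 z1 z2 s (scaled_derivative U1 U2 X HU1) HV)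
        (lerp_product_derivative _ _ V1 V2 x1 x2 z1 z2 s (scaled_derivative U U1 Y HU) HV1))) as H.
    unfold plus_fct in H; cbv beta in H; fold X Y in H.
    match type of H with
    | derivable_pt_lim _ _ ?l => replace (psi2 s) with l by (unfold psi2; ring)
    end.
    exact H. }
  assert (Hpos : forall s, 0 <= s <= 1 -> 0 <= psi2 s)
    by (intros s Hs; apply Hess; unfold lerp; nra).
  pose proof (convex_of_second_derivative_nonneg psi psi1 psi2 D1 D2 Hpos t Ht) as Hc.
  unfold psi in Hc; rewrite !lerp_0, !lerp_1 in Hc; exact Hc.
Qed.
End SeparableConvexity.

Lemma diff_within_plus_fst p p' S x z dx dz : derivable_pt_lim p x p' ->
  diff_within S x z dx dz -> diff_within (fun x z => p x + S x z) x z (p' + dx) dz.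
Proof.
  intros Hp HS eps He.
  destruct (derivable_pt_lim_eps p x p' Hp (eps / 2)) as [d [Hd Hpd]]; [lra|].
  destruct (HS (eps / 2)) as [d' [Hd' HSd]]; [lra|].
  exists (Rmin d d'); split; [now apply Rmin_pos|]; intros x' z' Hz Hx Hz'.
  specialize (Hpd x' (Rlt_le_trans _ _ _ Hx (Rmin_l _ _))).
  specialize (HSd x' z' Hz (Rlt_le_trans _ _ _ Hx (Rmin_r _ _))
    (Rlt_le_trans _ _ _ Hz' (Rmin_r _ _))).
  replace (p x' + S x' z' - (p x + S x z) - (p' + dx) * (x' - x) - dz * (z' - z)) with
    ((p x' - p x - p' * (x' - x)) + (S x' z' - S x z - dx * (x' - x) - dz * (z' - z))) by ring.
  eapply Rle_trans; [apply Rabs_triang|].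
  pose proof (Rabs_pos (z' - z)); pose proof (Rabs_pos (x' - x)); nra.
Qed.

Lemma dz_within_of_diff_within u x z dx dz : diff_within u x z dx dz -> dz_within u x z dz.
Proof.
  intros H eps He; destruct (H eps He) as [d [Hd Hu]]; exists d; split; [exact Hd|].
  intros z' Hz' Hzd; specialize (Hu x z' Hz' ltac:(rewrite Rminus_diag, Rabs_R0; lra) Hzd).
  now rewrite Rminus_diag, Rmult_0_r, Rminus_0_r, Rabs_R0, Rplus_0_l in Hu.
Qed.

Lemma cont_within_plus_const a S x z : cont_within S x z -> cont_within (fun x z => a + S x z) x z.
Proof.
  intros H eps He; destruct (H eps He) as [d [Hd Hs]]; exists d; split; [exact Hd|].
  intros x' z' Hz Hx Hz'; replace (a + S x' z' - (a + S x z)) with (S x' z' - S x z) by ring.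
  now apply Hs.
Qed.

Lemma convex_on_D_ext u v : (forall x z, 0 <= z -> u x z = v x z) ->
  convex_on_D u -> convex_on_D v.
Proof.
  intros Huv Hu x1 z1 x2 z2 t Hz1 Hz2 Ht; rewrite <- !Huv by (assumption || nra); now apply Hu.
Qed.

Lemma convex_on_D_plus u v :
  convex_on_D u -> convex_on_D v -> convex_on_D (fun x z => u x z + v x z).
Proof.
  intros Hu Hv x1 z1 x2 z2 t Hz1 Hz2 Ht.
  pose proof (Hu x1 z1 x2 z2 t Hz1 Hz2 Ht); pose proof (Hv x1 z1 x2 z2 t Hz1 Hz2 Ht); lra.
Qed.

Lemma convex_on_D_square a : 0 <= a -> convex_on_D (fun x _ => a * x ^ 2).
Proof.
  intros Ha x1 z1 x2 z2 t _ _ Ht.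
  assert (0 <= a * (t * (1 - t) * (x1 - x2) ^ 2))
    by (apply Rmult_le_pos; [exact Ha | apply Rmult_le_pos; [nra | apply pow2_ge_0]]).
  replace (t * (a * x1 ^ 2) + (1 - t) * (a * x2 ^ 2)) with
    (a * (t * x1 + (1 - t) * x2) ^ 2 + a * (t * (1 - t) * (x1 - x2) ^ 2)) by ring; lra.
Qed.

Lemma convex_on_D_series (T : nat -> R -> R -> R) : (forall k, convex_on_D (T k)) ->
  (forall x z, 0 <= z -> infinite_sum (fun k => T k x z) (series_sum (fun k => T k x z))) ->
  convex_on_D (fun x z => series_sum (fun k => T k x z)).
Proof.
  intros HT Hsum x1 z1 x2 z2 t Hz1 Hz2 Ht.
  apply (infinite_sum_le (fun k => T k (t * x1 + (1 - t) * x2) (t * z1 + (1 - t) * z2))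
    (fun k => t * T k x1 z1 + (1 - t) * T k x2 z2)).
  - intro k; now apply HT.
  - apply Hsum; nra.
  - apply infinite_sum_lin; now apply Hsum.
Qed.

(** * The map phi *)

Definition cubic (p : R) : R := 2 * p ^ 3 + p.
Definition phi_rhs (a : R) : R := (1 - a) / (2 - a).

Lemma cubic_lt p q : p < q -> cubic p < cubic q.
Proof. intro H; unfold cubic; assert (0 <= p ^ 2 + p * q + q ^ 2) by nra; nra. Qed.

Lemma cubic_le_iff p q : cubic p <= cubic q <-> p <= q.
Proof.
  split; intro H.
  - destruct (Rle_or_lt p q) as [|Hlt]; [assumption|]; pose proof (cubic_lt q p Hlt); lra.
  - destruct H as [H | ->]; [left; now apply cubic_lt | lra].
Qed.

Lemma cubic_surjective r : exists p, cubic p = r.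
Proof.
  set (M := Rabs r + 1); assert (HM : 1 <= M) by (unfold M; pose proof (Rabs_pos r); lra).
  assert (Hr : - M < r < M)
    by (unfold M; pose proof (Rle_abs r); pose proof (Rle_abs (- r)); rewrite Rabs_Ropp in *; lra).
  destruct (IVT (fun p => cubic p - r) (-M) M ltac:(unfold cubic; reg) ltac:(lra)) as [p [_ Hp]].
  - unfold cubic; assert (M <= M ^ 3) by nra; nra.
  - unfold cubic; assert (M <= M ^ 3) by nra; nra.
  - exists p; lra.
Qed.

Lemma cubic_phi a : cubic (phi a) = phi_rhs a.
Proof.
  unfold phi; apply (epsilon_spec (inhabits 0) (fun x => cubic x = phi_rhs a)), cubic_surjective.
Qed.

Lemma phi_le_iff a y : phi a <= y <-> phi_rhs a <= cubic y.
Proof. rewrite <- cubic_phi; symmetry; apply cubic_le_iff. Qed.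

Lemma phi_ge_iff a y : y <= phi a <-> cubic y <= phi_rhs a.
Proof. rewrite <- cubic_phi; symmetry; apply cubic_le_iff. Qed.

Lemma phi_rhs_le_iff a C : a < 2 -> (phi_rhs a <= C <-> (1 - 2 * C) + (C - 1) * a <= 0).
Proof.
  intro H; unfold phi_rhs, Rdiv; split; intro H1.
  - apply Rmult_le_compat_r with (r := 2 - a) in H1; [|lra].
    rewrite Rmult_assoc, Rinv_l in H1 by lra; lra.
  - apply Rmult_le_reg_r with (2 - a); [lra|]; rewrite Rmult_assoc, Rinv_l by lra; lra.
Qed.

Lemma phi_rhs_ge_iff a C : a < 2 -> (C <= phi_rhs a <-> (2 * C - 1) + (1 - C) * a <= 0).
Proof.
  intro H; unfold phi_rhs, Rdiv; split; intro H1.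
  - apply Rmult_le_compat_r with (r := 2 - a) in H1; [|lra].
    rewrite Rmult_assoc, Rinv_l in H1 by lra; lra.
  - apply Rmult_le_reg_r with (2 - a); [lra|]; rewrite Rmult_assoc, Rinv_l by lra; lra.
Qed.

Lemma phi_range a : 0 <= a <= 1 -> 0 <= phi a <= 1 / 2.
Proof.
  intro H; split.
  - apply phi_ge_iff; unfold cubic; apply phi_rhs_ge_iff; simpl; lra.
  - apply phi_le_iff; unfold cubic; apply phi_rhs_le_iff; simpl; lra.
Qed.

Lemma phi_antitone a b : a <= b -> b <= 1 -> phi b <= phi a.
Proof.
  intros Hab Hb; apply phi_le_iff; rewrite cubic_phi; unfold phi_rhs.
  assert (H : (1 - a) / (2 - a) - (1 - b) / (2 - b) = (b - a) / ((2 - a) * (2 - b)))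
    by (field; lra).
  assert (0 <= (b - a) / ((2 - a) * (2 - b)))
    by (apply Rmult_le_pos; [lra | apply Rlt_le, Rinv_0_lt_compat; nra]).
  lra.
Qed.

(** * Closed sets and the nearest points a_n, b_n *)

Definition adherent_closed (S : R -> Prop) : Prop :=
  forall m, (forall d, 0 < d -> exists s, S s /\ Rabs (s - m) < d) -> S m.

Lemma closed_set_adherent_closed S : closed_set S -> adherent_closed S.
Proof.
  intros H m Hm; apply NNPP; intro Hn; destruct (H m Hn) as [d Hd].
  destruct (Hm d (cond_pos d)) as [s [Hs Hsd]]; exact (Hd s Hsd Hs).
Qed.

Lemma adherent_closed_halfline S p q :
  adherent_closed S -> adherent_closed (fun a => S a /\ p + q * a <= 0).
Proof.
  intros HS m Hm; split.
  - apply HS; intros d Hd; destruct (Hm d Hd) as [s [[Hs _] H]]; eauto.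
  - apply Rnot_lt_le; intro Hpos; set (K := Rabs q + 1).
    assert (HK : 0 < K) by (unfold K; pose proof (Rabs_pos q); lra).
    destruct (Hm ((p + q * m) / K)) as [s [[_ Hs] Hsd]]; [now apply Rdiv_lt_0_compat|].
    assert (Hq : q * (m - s) <= (K - 1) * ((p + q * m) / K)).
    { eapply Rle_trans; [apply Rle_abs|]; rewrite Rabs_mult, Rabs_minus_sym.
      replace (K - 1) with (Rabs q) by (unfold K; ring).
      apply Rmult_le_compat_l; [apply Rabs_pos | lra]. }
    assert ((K - 1) * ((p + q * m) / K) < p + q * m).
    { apply Rlt_le_trans with (K * ((p + q * m) / K)); [|right; field; lra].
      apply Rmult_lt_compat_r; [apply Rdiv_lt_0_compat|]; lra. }
    lra.
Qed.

Lemma adherent_closed_has_min S lb : adherent_closed S -> (exists a, S a) ->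
  (forall a, S a -> lb <= a) -> exists m, S m /\ forall a, S a -> m <= a.
Proof.
  intros HS [a0 Ha0] Hlb.
  destruct (completeness (fun x => S (- x))) as [s [Hub Hl]].
  { exists (- lb); intros x Hx; specialize (Hlb _ Hx); lra. }
  { exists (- a0); now rewrite Ropp_involutive. }
  exists (- s); split.
  - apply HS; intros d Hd; apply NNPP; intro Hn.
    assert (is_upper_bound (fun x => S (- x)) (s - d)).
    { intros x Hx; apply Rnot_lt_le; intro Hlt; apply Hn; exists (- x); split; [exact Hx|].
      specialize (Hub x Hx); apply Rabs_def1; lra. }
    specialize (Hl _ H); lra.
  - intros a Ha; assert (S (- - a)) by now rewrite Ropp_involutive.
    specialize (Hub _ H); lra.
Qed.

Lemma adherent_closed_has_max S ub : adherent_closed S -> (exists a, S a) ->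
  (forall a, S a -> a <= ub) -> exists m, S m /\ forall a, S a -> a <= m.
Proof.
  intros HS [a0 Ha0] Hub.
  destruct (adherent_closed_has_min (fun x => S (- x)) (- ub)) as [m [Hm Hmin]].
  - intros m Hm; apply HS; intros d Hd; destruct (Hm d Hd) as [s [Hs Hsd]].
    exists (- s); split; [exact Hs|].
    replace (- s - - m) with (- (s - m)) by ring. now rewrite Rabs_Ropp.
  - exists (- a0); now rewrite Ropp_involutive.
  - intros a Ha; specialize (Hub _ Ha); lra.
  - exists (- m); split; [exact Hm|]; intros a Ha.
    assert (S (- - a)) by now rewrite Ropp_involutive.
    specialize (Hmin _ H); lra.
Qed.

Lemma adherent_closed_ext (S T : R -> Prop) : (forall a, S a <-> T a) ->
  adherent_closed S -> adherent_closed T.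
Proof.
  intros HST HS m Hm; apply HST, HS; intros d Hd.
  destruct (Hm d Hd) as [s [Hs Hsd]]; exists s; split; [now apply HST | exact Hsd].
Qed.

Definition gap_l (F : nat -> R -> Prop) (n : nat) (y : R) : R := y - a_ F n y.
Definition gap_r (F : nat -> R -> Prop) (n : nat) (y : R) : R := b_ F n y - y.

Section Gaps.
Variables (F : nat -> R -> Prop) (n : nat).
Hypothesis hclosed : closed_set (F n).
Hypothesis hsub : forall a, F n a -> 0 <= a <= 1.

(* Through [cubic], [phi a <= y] becomes a linear inequality in [a]. *)
Lemma phi_sublevel_closed y : adherent_closed (fun a => F n a /\ phi a <= y).
Proof.
  apply (adherent_closed_ext (fun a => F n a /\ (1 - 2 * cubic y) + (cubic y - 1) * a <= 0)).
  - intro a; rewrite phi_le_iff; split; intros [Ha H]; split; try exact Ha;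
      pose proof (hsub a Ha); now apply (phi_rhs_le_iff a (cubic y) ltac:(lra)).
  - apply adherent_closed_halfline, closed_set_adherent_closed, hclosed.
Qed.

Lemma phi_superlevel_closed y : adherent_closed (fun a => F n a /\ y <= phi a).
Proof.
  apply (adherent_closed_ext (fun a => F n a /\ (2 * cubic y - 1) + (1 - cubic y) * a <= 0)).
  - intro a; rewrite phi_ge_iff; split; intros [Ha H]; split; try exact Ha;
      pose proof (hsub a Ha); now apply (phi_rhs_ge_iff a (cubic y) ltac:(lra)).
  - apply adherent_closed_halfline, closed_set_adherent_closed, hclosed.
Qed.

Lemma a_exists y : exists v, E F n v /\ v <= y /\ forall w, E F n w -> w <= y -> w <= v.
Proof.
  destruct (Rle_or_lt y (-1)) as [Hy | Hy]; [exists y; split; [now left | split; [lra | auto]]|].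
  destruct (Rle_or_lt 2 y) as [Hy2 | Hy2];
    [exists y; split; [now right; left | split; [lra | auto]]|].
  destruct (classic (exists a, F n a /\ phi a <= y)) as [Hex | Hnex].
  - destruct (adherent_closed_has_min _ 0 (phi_sublevel_closed y) Hex) as [m [[Hm Hmy] Hmin]];
      [intros a [Ha _]; apply hsub, Ha|].
    exists (phi m); split; [right; right; now exists m | split; [exact Hmy|]].
    intros w [Hw | [Hw | [a [Ha ->]]]] Hwy; [pose proof (phi_range m (hsub m Hm)); lra | lra|].
    apply phi_antitone; [apply Hmin; now split | apply hsub, Ha].
  - exists (-1); split; [left; lra | split; [lra|]].
    intros w [Hw | [Hw | [a [Ha ->]]]] Hwy; [exact Hw | lra | exfalso; apply Hnex; now exists a].
Qed.

Lemma b_exists y : exists v, E F n v /\ y <= v /\ forall w, E F n w -> y <= w -> v <= w.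
Proof.
  destruct (Rle_or_lt y (-1)) as [Hy | Hy]; [exists y; split; [now left | split; [lra | auto]]|].
  destruct (Rle_or_lt 2 y) as [Hy2 | Hy2];
    [exists y; split; [now right; left | split; [lra | auto]]|].
  destruct (classic (exists a, F n a /\ y <= phi a)) as [Hex | Hnex].
  - destruct (adherent_closed_has_max _ 1 (phi_superlevel_closed y) Hex) as [m [[Hm Hmy] Hmax]];
      [intros a [Ha _]; apply hsub, Ha|].
    exists (phi m); split; [right; right; now exists m | split; [exact Hmy|]].
    intros w [Hw | [Hw | [a [Ha ->]]]] Hwy; [lra | pose proof (phi_range m (hsub m Hm)); lra|].
    apply phi_antitone; [apply Hmax; now split | apply hsub, Hm].
  - exists 2; split; [right; left; lra | split; [lra|]].
    intros w [Hw | [Hw | [a [Ha ->]]]] Hwy; [lra | exact Hw | exfalso; apply Hnex; now exists a].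
Qed.

Lemma a_spec y : E F n (a_ F n y) /\ a_ F n y <= y /\
  forall w, E F n w -> w <= y -> w <= a_ F n y.
Proof. unfold a_; apply epsilon_spec, a_exists. Qed.

Lemma b_spec y : E F n (b_ F n y) /\ y <= b_ F n y /\
  forall w, E F n w -> y <= w -> b_ F n y <= w.
Proof. unfold b_; apply epsilon_spec, b_exists. Qed.

Lemma a_b_of_E y : E F n y -> a_ F n y = y /\ b_ F n y = y.
Proof.
  intro H; destruct (a_spec y) as [_ [H1 H2]]; destruct (b_spec y) as [_ [H3 H4]].
  specialize (H2 y H (Rle_refl _)); specialize (H4 y H (Rle_refl _)); lra.
Qed.

Lemma gap_range y : 0 <= gap_l F n y /\ 0 <= gap_r F n y /\ gap_l F n y + gap_r F n y <= 3.
Proof.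
  unfold gap_l, gap_r; destruct (classic (E F n y)) as [H | H].
  - destruct (a_b_of_E y H); lra.
  - destruct (a_spec y) as [_ [H1 H2]]; destruct (b_spec y) as [_ [H3 H4]].
    assert (-1 < y < 2) by (split; apply Rnot_le_lt; intro; apply H; [left | right; left]; lra).
    specialize (H2 (-1) ltac:(left; lra) ltac:(lra)).
    specialize (H4 2 ltac:(right; left; lra) ltac:(lra)); lra.
Qed.

Lemma gap_min_le_dist y0 y : E F n y0 -> Rmin (gap_l F n y) (gap_r F n y) <= Rabs (y - y0).
Proof.
  intro H; unfold gap_l, gap_r; destruct (Rle_or_lt y0 y) as [Hle | Hlt].
  - destruct (a_spec y) as [_ [_ H2]]; specialize (H2 y0 H Hle).
    rewrite Rabs_right by lra; pose proof (Rmin_l (y - a_ F n y) (b_ F n y - y)); lra.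
  - destruct (b_spec y) as [_ [_ H2]]; specialize (H2 y0 H (Rlt_le _ _ Hlt)).
    rewrite Rabs_left by lra; pose proof (Rmin_r (y - a_ F n y) (b_ F n y - y)); lra.
Qed.

Lemma a_b_locally_const y : ~ E F n y -> exists d, 0 < d /\ forall y', Rabs (y' - y) < d ->
  a_ F n y' = a_ F n y /\ b_ F n y' = b_ F n y.
Proof.
  intro H; destruct (a_spec y) as [Ha1 [Ha2 Ha3]]; destruct (b_spec y) as [Hb1 [Hb2 Hb3]].
  assert (Hay : a_ F n y < y) by (destruct Ha2 as [|Heq]; [assumption | now rewrite Heq in Ha1]).
  assert (Hby : y < b_ F n y) by (destruct Hb2 as [|Heq]; [assumption | now rewrite <- Heq in Hb1]).
  exists (Rmin (y - a_ F n y) (b_ F n y - y)); split; [apply Rmin_pos; lra|].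
  intros y' Hy'; apply Rabs_def2 in Hy'.
  pose proof (Rmin_l (y - a_ F n y) (b_ F n y - y)).
  pose proof (Rmin_r (y - a_ F n y) (b_ F n y - y)).
  destruct (a_spec y') as [Ha1' [Ha2' Ha3']]; destruct (b_spec y') as [Hb1' [Hb2' Hb3']].
  split; apply Rle_antisym.
  - apply Ha3; [exact Ha1'|]; apply Rnot_lt_le; intro; specialize (Hb3 _ Ha1' ltac:(lra)); lra.
  - apply Ha3'; [exact Ha1 | lra].
  - apply Hb3'; [exact Hb1 | lra].
  - apply Hb3; [exact Hb1'|]; apply Rnot_lt_le; intro; specialize (Ha3 _ Hb1' ltac:(lra)); lra.
Qed.

Lemma gaps_locally_affine y : ~ E F n y -> exists d, 0 < d /\ forall y', Rabs (y' - y) < d ->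
  gap_l F n y' = y' - a_ F n y /\ gap_r F n y' = b_ F n y - y'.
Proof.
  intro H; destruct (a_b_locally_const y H) as [d [Hd Hl]]; exists d; split; [exact Hd|].
  intros y' Hy'; unfold gap_l, gap_r; destruct (Hl y' Hy') as [-> ->]; now split.
Qed.

End Gaps.

(** * The functions g_n *)

Definition P0 (s t : R) : R := s ^ 3 * t ^ 3.
Definition P1 (s t : R) : R := 3 * s ^ 2 * t ^ 2 * (t - s).
Definition P2 (s t : R) : R := 6 * s * t * (t ^ 2 - 3 * s * t + s ^ 2).

Lemma P0_derivative a b y :
  derivable_pt_lim (fun y => P0 (y - a) (b - y)) y (P1 (y - a) (b - y)).
Proof. apply is_derive_Reals; unfold P0, P1; auto_derive; [trivial | ring]. Qed.

Lemma P1_derivative a b y :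
  derivable_pt_lim (fun y => P1 (y - a) (b - y)) y (P2 (y - a) (b - y)).
Proof. apply is_derive_Reals; unfold P1, P2; auto_derive; [trivial | ring]. Qed.

Lemma P2_continuity a b y : continuity_pt (fun y => P2 (y - a) (b - y)) y.
Proof. unfold P2; reg. Qed.

Section Triangle.
Variables s t : R.
Hypotheses (Hs : 0 <= s) (Ht : 0 <= t) (Hst : s + t <= 3).

Lemma P0_flat : Rabs (P0 s t) <= 81 * Rmin s t ^ 2.
Proof.
  unfold P0; rewrite Rabs_right by (apply Rle_ge, Rmult_le_pos; apply pow_le; lra).
  destruct (Rle_dec s t); [rewrite Rmin_left | rewrite Rmin_right]; try lra.
  - assert (s * t ^ 3 <= 81) by (assert (t ^ 2 <= 9) by nra; assert (s * t <= 9) by nra; nra); nra.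
  - assert (t * s ^ 3 <= 81) by (assert (s ^ 2 <= 9) by nra; assert (s * t <= 9) by nra; nra); nra.
Qed.

Lemma P1_flat : Rabs (P1 s t) <= 81 * Rmin s t ^ 2.
Proof.
  unfold P1; destruct (Rle_dec s t); [rewrite Rmin_left | rewrite Rmin_right]; try lra.
  - replace (3 * s ^ 2 * t ^ 2 * (t - s)) with (s ^ 2 * (3 * t ^ 2 * (t - s))) by ring.
    rewrite Rabs_mult, (Rabs_right (s ^ 2)) by (apply Rle_ge, pow2_ge_0).
    rewrite (Rmult_comm 81); apply Rmult_le_compat_l; [apply pow2_ge_0|].
    apply Rabs_le; assert (0 <= t ^ 2 <= 9) by nra; split; nra.
  - replace (3 * s ^ 2 * t ^ 2 * (t - s)) with (t ^ 2 * (3 * s ^ 2 * (t - s))) by ring.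
    rewrite Rabs_mult, (Rabs_right (t ^ 2)) by (apply Rle_ge, pow2_ge_0).
    rewrite (Rmult_comm 81); apply Rmult_le_compat_l; [apply pow2_ge_0|].
    apply Rabs_le; assert (0 <= s ^ 2 <= 9) by nra; split; nra.
Qed.

Lemma P2_lipschitz : Rabs (P2 s t) <= 162 * Rmin s t.
Proof.
  assert (Hq : - 27 / 4 <= t ^ 2 - 3 * s * t + s ^ 2 <= 9) by (split; nra).
  unfold P2; destruct (Rle_dec s t); [rewrite Rmin_left | rewrite Rmin_right]; try lra.
  - replace (6 * s * t * (t ^ 2 - 3 * s * t + s ^ 2))
      with (s * (6 * t * (t ^ 2 - 3 * s * t + s ^ 2))) by ring.
    rewrite Rabs_mult, (Rabs_right s) by lra.
    rewrite (Rmult_comm 162); apply Rmult_le_compat_l; [lra|]; apply Rabs_le; split; nra.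
  - replace (6 * s * t * (t ^ 2 - 3 * s * t + s ^ 2))
      with (t * (6 * s * (t ^ 2 - 3 * s * t + s ^ 2))) by ring.
    rewrite Rabs_mult, (Rabs_right t) by lra.
    rewrite (Rmult_comm 162); apply Rmult_le_compat_l; [lra|]; apply Rabs_le; split; nra.
Qed.

End Triangle.

Section Profiles.
Variables (F : nat -> R -> Prop) (n : nat).
Hypothesis hclosed : closed_set (F n).
Hypothesis hsub : forall a, F n a -> 0 <= a <= 1.

Let profile (P : R -> R -> R) (y : R) : R := P (gap_l F n y) (gap_r F n y).

Lemma gaps_of_E y : E F n y -> gap_l F n y = 0 /\ gap_r F n y = 0.
Proof. intro H; unfold gap_l, gap_r; destruct (a_b_of_E F n hclosed hsub y H) as [-> ->]; lra. Qed.

Lemma gap_min_small y y' : E F n y ->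
  0 <= Rmin (gap_l F n y') (gap_r F n y') <= Rabs (y' - y) /\
  Rmin (gap_l F n y') (gap_r F n y') ^ 2 <= (y' - y) ^ 2.
Proof.
  intros HE; pose proof (gap_min_le_dist F n hclosed hsub y y' HE) as Hm.
  destruct (gap_range F n hclosed hsub y') as [Hs [Ht _]].
  assert (0 <= Rmin (gap_l F n y') (gap_r F n y')) by now apply Rmin_glb.
  split; [lra|]; rewrite <- (pow2_abs (y' - y)); apply pow_incr; lra.
Qed.

(* Off E the gaps are affine near y; on E the profile is flat to second order. *)
Lemma profile_derivative P P' C : 0 <= C ->
  (forall a b y, derivable_pt_lim (fun y => P (y - a) (b - y)) y (P' (y - a) (b - y))) ->
  P' 0 0 = 0 ->
  (forall s t, 0 <= s -> 0 <= t -> s + t <= 3 -> Rabs (P s t) <= C * Rmin s t ^ 2) ->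
  forall y, derivable_pt_lim (profile P) y (profile P' y).
Proof.
  intros HC HP HP' Hflat y; unfold profile.
  destruct (classic (E F n y)) as [HE | HE].
  - destruct (gaps_of_E y HE) as [Hl Hr]; rewrite Hl, Hr, HP'.
    apply derivable_pt_lim_flat with C.
    + specialize (Hflat 0 0 ltac:(lra) ltac:(lra) ltac:(lra)).
      rewrite Rmin_left, pow_i, Rmult_0_r in Hflat by (lra || lia).
      rewrite Hl, Hr; exact (Rabs_eq_0 _ (Rle_antisym _ _ Hflat (Rabs_pos _))).
    + intros y' _; destruct (gap_range F n hclosed hsub y') as [Hs [Ht Hst]].
      destruct (gap_min_small y y' HE) as [_ Hm2].
      eapply Rle_trans; [now apply Hflat | now apply Rmult_le_compat_l].
  - destruct (gaps_locally_affine F n hclosed hsub y HE) as [d [Hd Hloc]].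
    destruct (Hloc y ltac:(rewrite Rminus_diag, Rabs_R0; lra)) as [-> ->].
    apply (derivable_pt_lim_locally_ext (fun y' => P (y' - a_ F n y) (b_ F n y - y')) _ _
      (y - d) (y + d)); [lra | | apply HP].
    intros y' Hy'; destruct (Hloc y' ltac:(apply Rabs_def1; lra)) as [-> ->]; reflexivity.
Qed.

Lemma profile_continuity P C : 0 <= C ->
  (forall a b y, continuity_pt (fun y => P (y - a) (b - y)) y) ->
  (forall s t, 0 <= s -> 0 <= t -> s + t <= 3 -> Rabs (P s t) <= C * Rmin s t) ->
  forall y, continuity_pt (profile P) y.
Proof.
  intros HC HP Hlip y; unfold profile.
  destruct (classic (E F n y)) as [HE | HE].
  - apply continuity_pt_local_lipschitz with C; intros y' _.
    destruct (gaps_of_E y HE) as [Hl Hr]; rewrite Hl, Hr.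
    assert (H0 : P 0 0 = 0).
    { specialize (Hlip 0 0 ltac:(lra) ltac:(lra) ltac:(lra)).
      rewrite Rmin_left, Rmult_0_r in Hlip by lra.
      exact (Rabs_eq_0 _ (Rle_antisym _ _ Hlip (Rabs_pos _))). }
    rewrite H0, Rminus_0_r; destruct (gap_range F n hclosed hsub y') as [Hs [Ht Hst]].
    destruct (gap_min_small y y' HE) as [Hm _].
    eapply Rle_trans; [now apply Hlip | apply Rmult_le_compat_l; lra].
  - destruct (gaps_locally_affine F n hclosed hsub y HE) as [d [Hd Hloc]].
    apply (continuity_pt_locally_ext (fun y' => P (y' - a_ F n y) (b_ F n y - y')) _ d);
      [exact Hd | | apply HP].
    intros y' Hy'; destruct (Hloc y' Hy') as [-> ->]; reflexivity.
Qed.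

Definition g1 (y : R) : R := P1 (gap_l F n y) (gap_r F n y).
Definition g2 (y : R) : R := P2 (gap_l F n y) (gap_r F n y).

Lemma g_derivative y : derivable_pt_lim (g_ F n) y (g1 y).
Proof.
  exact (profile_derivative P0 P1 81 ltac:(lra) P0_derivative ltac:(unfold P1; ring) P0_flat y).
Qed.

Lemma g1_derivative y : derivable_pt_lim g1 y (g2 y).
Proof.
  exact (profile_derivative P1 P2 81 ltac:(lra) P1_derivative ltac:(unfold P2; ring) P1_flat y).
Qed.

Lemma g2_continuity y : continuity_pt g2 y.
Proof.
  exact (profile_continuity P2 162 ltac:(lra) P2_continuity P2_lipschitz y).
Qed.

Lemma g_bounds y : Rabs (g_ F n y) <= 243 /\ Rabs (g1 y) <= 243 /\ Rabs (g2 y) <= 243.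
Proof.
  destruct (gap_range F n hclosed hsub y) as [Hs [Ht Hst]].
  pose proof (P0_flat _ _ Hs Ht Hst); pose proof (P1_flat _ _ Hs Ht Hst);
  pose proof (P2_lipschitz _ _ Hs Ht Hst).
  assert (Hm : 0 <= Rmin (gap_l F n y) (gap_r F n y) <= 3 / 2)
    by (split; [now apply Rmin_glb | pose proof (Rmin_l (gap_l F n y) (gap_r F n y));
               pose proof (Rmin_r (gap_l F n y) (gap_r F n y)); lra]).
  assert (Rmin (gap_l F n y) (gap_r F n y) ^ 2 <= 9 / 4) by nra.
  change (g_ F n y) with (P0 (gap_l F n y) (gap_r F n y)); unfold g1, g2; repeat split; lra.
Qed.

Lemma g_nonneg y : 0 <= g_ F n y.
Proof.
  destruct (gap_range F n hclosed hsub y) as [Hs [Ht _]].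
  change (g_ F n y) with (gap_l F n y ^ 3 * gap_r F n y ^ 3).
  apply Rmult_le_pos; now apply pow_le.
Qed.

Lemma g_eq_0_iff y : g_ F n y = 0 <-> E F n y.
Proof.
  change (g_ F n y) with (gap_l F n y ^ 3 * gap_r F n y ^ 3); split; intro H.
  - assert (Hroot : forall u, u ^ 3 = 0 -> u = 0)
      by (intros u Hu; apply NNPP; intro Hne; exact (pow_nonzero u 3 Hne Hu)).
    destruct (Rmult_integral _ _ H) as [H0 | H0]; apply Hroot in H0; unfold gap_l, gap_r in H0.
    + replace y with (a_ F n y) by lra; apply (a_spec F n hclosed hsub y).
    + replace y with (b_ F n y) by lra; apply (b_spec F n hclosed hsub y).
  - destruct (gaps_of_E y H) as [-> ->]; ring.
Qed.

End Profiles.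

(** * The functions h_n *)

Definition ramp (N z : R) : R := Rmax (N - z) 0.
Definition h1 (n : nat) (z : R) : R := -3 * ramp (INR n) z ^ 2.
Definition h2 (n : nat) (z : R) : R := 6 * ramp (INR n) z.

Lemma ramp_lipschitz N y z : Rabs (ramp N y - ramp N z) <= Rabs (y - z).
Proof.
  unfold ramp, Rmax; destruct (Rle_dec (N - y) 0), (Rle_dec (N - z) 0);
    apply Rabs_le; pose proof (Rle_abs (y - z)); pose proof (Rle_abs (- (y - z)));
    rewrite Rabs_Ropp in *; lra.
Qed.

Lemma ramp_pow_derivative N k z : (2 <= k)%nat ->
  derivable_pt_lim (fun y => ramp N y ^ k) z (- INR k * ramp N z ^ pred k).
Proof.
  intro Hk; unfold ramp; destruct (Rtotal_order z N) as [Hlt | [-> | Hgt]].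
  - rewrite Rmax_left by lra.
    apply (derivable_pt_lim_locally_ext (fun y => (N - y) ^ k) _ _ (z - 1) N); [lra | |].
    + intros y Hy; now rewrite Rmax_left by lra.
    + apply is_derive_Reals; auto_derive; [trivial|]; unfold Rminus; ring.
  - rewrite Rminus_diag, Rmax_right, pow_i, Rmult_0_r by (lra || lia).
    apply derivable_pt_lim_flat with 1.
    { rewrite Rminus_diag, Rmax_right by lra; apply pow_i; lia. }
    intros y Hy; rewrite <- RPow_abs.
    pose proof (ramp_lipschitz N y N) as Hr; unfold ramp in Hr.
    rewrite Rminus_diag, (Rmax_right 0 0), Rminus_0_r in Hr by lra.
    set (r := Rabs (Rmax (N - y) 0)) in *; assert (Hr0 : 0 <= r) by apply Rabs_pos.
    replace k with (2 + (k - 2))%nat by lia; rewrite pow_add.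
    assert (r ^ (k - 2) <= 1) by (rewrite <- (pow1 (k - 2)); apply pow_incr; lra).
    assert (r ^ 2 <= (y - N) ^ 2) by (rewrite <- (pow2_abs (y - N)); apply pow_incr; lra).
    assert (0 <= r ^ 2) by apply pow2_ge_0; assert (0 <= r ^ (k - 2)) by now apply pow_le.
    nra.
  - rewrite Rmax_right, pow_i, Rmult_0_r by (lra || lia).
    apply (derivable_pt_lim_locally_ext (fun _ => 0) _ _ N (z + 1)); [lra | |
      apply derivable_pt_lim_const].
    intros y Hy; rewrite Rmax_right by lra; now rewrite pow_i by lia.
Qed.

Lemma h_derivative n z : derivable_pt_lim (h_ n) z (h1 n z).
Proof.
  apply (derivable_pt_lim_ext (fun y => ramp (INR n) y ^ 3)); [reflexivity|].
  unfold h1; replace (-3) with (- INR 3) by (simpl; ring).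
  apply ramp_pow_derivative; lia.
Qed.

Lemma h1_derivative n z : derivable_pt_lim (h1 n) z (h2 n z).
Proof.
  unfold h1, h2; replace (6 * ramp (INR n) z) with (-3 * (- INR 2 * ramp (INR n) z ^ pred 2))
    by (simpl; ring).
  apply derivable_pt_lim_scal with (f := fun y => ramp (INR n) y ^ 2), ramp_pow_derivative; lia.
Qed.

Lemma h2_continuity n z : continuity_pt (h2 n) z.
Proof.
  apply continuity_pt_local_lipschitz with 6; intros y _; unfold h2.
  replace (6 * ramp (INR n) y - 6 * ramp (INR n) z) with (6 * (ramp (INR n) y - ramp (INR n) z))
    by ring.
  rewrite Rabs_mult, (Rabs_right 6) by lra; apply Rmult_le_compat_l; [lra | apply ramp_lipschitz].
Qed.

Lemma h_nonneg n z : 0 <= h_ n z.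
Proof. apply pow_le, Rmax_r. Qed.

Lemma h_bounds n z : (1 <= n)%nat -> 0 <= z ->
  Rabs (h_ n z) <= 6 * INR n ^ 3 /\ Rabs (h1 n z) <= 6 * INR n ^ 3 /\
  Rabs (h2 n z) <= 6 * INR n ^ 3.
Proof.
  intros Hn Hz; assert (HN : 1 <= INR n) by now apply (le_INR 1).
  assert (Hw : 0 <= ramp (INR n) z <= INR n)
    by (unfold ramp, Rmax; destruct Rle_dec; lra).
  change (h_ n z) with (ramp (INR n) z ^ 3); unfold h1, h2.
  set (w := ramp (INR n) z) in *; set (N := INR n) in *.
  assert (0 <= w ^ 2 <= N ^ 2) by (split; [apply pow_le | apply pow_incr]; lra).
  assert (0 <= w ^ 3 <= N ^ 3) by (split; [apply pow_le | apply pow_incr]; lra).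
  assert (N ^ 2 <= N ^ 3) by (simpl; nra); assert (N <= N ^ 3) by (simpl; nra).
  repeat split; apply Rabs_le; split; nra.
Qed.

(** * The function f *)

Lemma quadratic_form_nonneg A B C V Y : 0 < A -> 0 <= 4 * A * C - B ^ 2 ->
  0 <= A * V ^ 2 - B * V * Y + C * Y ^ 2.
Proof.
  intros HA HD; apply Rmult_le_reg_l with (4 * A); [lra|]; rewrite Rmult_0_r.
  replace (4 * A * (A * V ^ 2 - B * V * Y + C * Y ^ 2))
    with ((2 * A * V - B * Y) ^ 2 + (4 * A * C - B ^ 2) * Y ^ 2) by ring.
  apply Rplus_le_le_0_compat; [apply pow2_ge_0 | apply Rmult_le_pos; [exact HD | apply pow2_ge_0]].
Qed.

(* The right side is the Hessian form at (X, Y) of K N^3 x^2 + g(x) h(z), K = 81^2/6, where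
   s, t are the gaps of x and w = (N - z)_+.  With V := w X it is at least
   w (A V^2 - B V Y + C Y^2) for A = 2187 + P2 s t, B = 6 P1 s t, C = 6 P0 s t; the constant
   2187 = 2 K makes A positive and 4AC - B^2 = (st)^3 (24 A - 324 st (t-s)^2) nonnegative. *)
Lemma term_hessian_nonneg s t w N X Y : 0 <= s -> 0 <= t -> s + t <= 3 -> 0 <= w <= N ->
  0 <= 2187 * N ^ 3 * X ^ 2 + X ^ 2 * P2 s t * w ^ 3 + 2 * X * Y * P1 s t * (-3 * w ^ 2)
       + Y ^ 2 * P0 s t * (6 * w).
Proof.
  intros Hs Ht Hst Hw; unfold P0, P1, P2.
  assert (Hq : 0 <= (s + t) ^ 2 <= 9) by (split; nra).
  assert (Hp : 0 <= s * t <= 9 / 4) by (pose proof (pow2_ge_0 (s - t)); split; nra).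
  set (p := s * t) in *; set (q := (s + t) ^ 2) in *.
  assert (Hpq : p * q <= 81 / 4)
    by (apply Rle_trans with (9 / 4 * 9); [apply Rmult_le_compat |]; lra).
  set (A := 2187 + 6 * s * t * (t ^ 2 - 3 * s * t + s ^ 2)).
  set (B := 18 * s ^ 2 * t ^ 2 * (t - s)); set (C := 6 * s ^ 3 * t ^ 3).
  assert (HA : 0 < A).
  { replace A with (2187 + 6 * p * (q - 5 * p)) by (unfold A, p, q; ring).
    assert (0 <= p * q) by (apply Rmult_le_pos; lra); nra. }
  assert (HD : 0 <= 4 * A * C - B ^ 2).
  { replace (4 * A * C - B ^ 2) with (p ^ 3 * (52488 - 180 * p * q + 576 * p ^ 2))
      by (unfold A, B, C, p, q; ring).
    apply Rmult_le_pos; [apply pow_le; lra | nra]. }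
  pose proof (quadratic_form_nonneg A B C (w * X) Y HA HD) as HQ.
  assert (w ^ 3 * X ^ 2 <= N ^ 3 * X ^ 2)
    by (apply Rmult_le_compat_r; [apply pow2_ge_0 | apply pow_incr; lra]).
  assert (0 <= w * (A * (w * X) ^ 2 - B * (w * X) * Y + C * Y ^ 2)) by (apply Rmult_le_pos; lra).
  unfold A, B, C in *; nra.
Qed.

Section Main.
Variables (F : nat -> R -> Prop) (c : nat -> R) (L : R).
Hypothesis hFclosed : forall n, (1 <= n)%nat -> closed_set (F n).
Hypothesis hFsub : forall n, (1 <= n)%nat -> forall alpha, F n alpha -> 0 <= alpha <= 1.
Hypothesis hFmono : forall n, (1 <= n)%nat -> forall alpha, F n alpha -> F (S n) alpha.
Hypothesis hcpos : forall n, (1 <= n)%nat -> 0 < c n.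
Hypothesis hL : infinite_sum (fun k => 81 ^ 2 / 6 * INR (S k) ^ 3 * c (S k)) L.
Hypothesis hL1 : L < 1.

(* The series defining f starts at n = 1: its k-th term uses index n = S k. *)
Let hclosed k := hFclosed (S k) ltac:(lia).
Let hsub k := hFsub (S k) ltac:(lia).
Let hc k := hcpos (S k) ltac:(lia).

Definition A0 k x := c (S k) * g_ F (S k) x.
Definition A1 k x := c (S k) * g1 F (S k) x.
Definition A2 k x := c (S k) * g2 F (S k) x.
Definition B0 k z := h_ (S k) z.
Definition B1 k z := h1 (S k) z.
Definition B2 k z := h2 (S k) z.
Definition bound_x k := c (S k) * 243.
Definition bound_z k := 6 * INR (S k) ^ 3.

Lemma bounds_summable : infinite_sum (fun k => bound_x k * bound_z k) (4 / 3 * L).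
Proof.
  refine (infinite_sum_ext _ _ _ _ _ _ (infinite_sum_scal _ (4 / 3) _ hL));
    [intro k; unfold bound_x, bound_z; field | reflexivity].
Qed.

Lemma A_derivatives k y :
  derivable_pt_lim (A0 k) y (A1 k y) /\ derivable_pt_lim (A1 k) y (A2 k y) /\
  continuity_pt (A2 k) y.
Proof.
  repeat split.
  - apply derivable_pt_lim_scal, (g_derivative F (S k) (hclosed k) (hsub k)).
  - apply derivable_pt_lim_scal, (g1_derivative F (S k) (hclosed k) (hsub k)).
  - apply continuity_pt_scal, (g2_continuity F (S k) (hclosed k) (hsub k)).
Qed.

Lemma B_derivatives k z :
  derivable_pt_lim (B0 k) z (B1 k z) /\ derivable_pt_lim (B1 k) z (B2 k z) /\
  continuity_pt (B2 k) z.
Proof. repeat split; [apply h_derivative | apply h1_derivative | apply h2_continuity]. Qed.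

Lemma A_bounds k y :
  Rabs (A0 k y) <= bound_x k /\ Rabs (A1 k y) <= bound_x k /\ Rabs (A2 k y) <= bound_x k.
Proof.
  destruct (g_bounds F (S k) (hclosed k) (hsub k) y) as [b0 [b1 b2]]; pose proof (hc k).
  unfold A0, A1, A2, bound_x; rewrite !Rabs_mult, !(Rabs_right (c (S k))) by lra.
  repeat split; apply Rmult_le_compat_l; lra.
Qed.

Lemma B_bounds k z : 0 <= z ->
  Rabs (B0 k z) <= bound_z k /\ Rabs (B1 k z) <= bound_z k /\ Rabs (B2 k z) <= bound_z k.
Proof. intro Hz; apply h_bounds; [lia | exact Hz]. Qed.

Lemma f_eq x z : f_ F c x z = x ^ 2 + sep_series A0 B0 x z.
Proof. reflexivity. Qed.

Let Hab := bounds_summable.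
Let dA0 k y := proj1 (A_derivatives k y).
Let dA1 k y := proj1 (proj2 (A_derivatives k y)).
Let cA2 k y := proj2 (proj2 (A_derivatives k y)).
Let dB0 k z := proj1 (B_derivatives k z).
Let dB1 k z := proj1 (proj2 (B_derivatives k z)).
Let cB2 k z := proj2 (proj2 (B_derivatives k z)).
Let bA0 k y := proj1 (A_bounds k y).
Let bA1 k y := proj1 (proj2 (A_bounds k y)).
Let bA2 k y := proj2 (proj2 (A_bounds k y)).
Let bB0 k z Hz := proj1 (B_bounds k z Hz).
Let bB1 k z Hz := proj1 (proj2 (B_bounds k z Hz)).
Let bB2 k z Hz := proj2 (proj2 (B_bounds k z Hz)).

Lemma f_diff x z : 0 <= z ->
  diff_within (f_ F c) x z (2 * x + sep_series A1 B0 x z) (sep_series A0 B1 x z).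
Proof.
  intro Hz; apply (diff_within_plus_fst (fun x => x ^ 2)).
  - apply is_derive_Reals; auto_derive; [trivial | ring].
  - exact (sep_series_diff _ _ _ Hab A0 A1 B0 B1 x z dA0 dB0 bA0 bA1 bB0 bB1 Hz).
Qed.

Lemma f_C2 : C2_on_D (f_ F c).
Proof.
  exists (fun x z => 2 * x + sep_series A1 B0 x z), (sep_series A0 B1),
    (fun x z => 2 + sep_series A2 B0 x z), (sep_series A1 B1), (sep_series A1 B1),
    (sep_series A0 B2).
  intros x z Hz; repeat split.
  - now apply f_diff.
  - apply (diff_within_plus_fst (fun x => 2 * x)).
    + apply is_derive_Reals; auto_derive; [trivial | ring].
    + exact (sep_series_diff _ _ _ Hab A1 A2 B0 B1 x z dA1 dB0 bA1 bA2 bB0 bB1 Hz).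
  - exact (sep_series_diff _ _ _ Hab A0 A1 B1 B2 x z dA0 dB1 bA0 bA1 bB1 bB2 Hz).
  - apply cont_within_plus_const.
    exact (sep_series_cont _ _ _ Hab A2 B0 x z cA2
      (fun k z => derivable_pt_lim_continuity_pt _ _ _ (dB0 k z)) bA2 bB0 Hz).
  - exact (sep_series_cont _ _ _ Hab A1 B1 x z
      (fun k y => derivable_pt_lim_continuity_pt _ _ _ (dA1 k y))
      (fun k z => derivable_pt_lim_continuity_pt _ _ _ (dB1 k z)) bA1 bB1 Hz).
  - exact (sep_series_cont _ _ _ Hab A1 B1 x z
      (fun k y => derivable_pt_lim_continuity_pt _ _ _ (dA1 k y))
      (fun k z => derivable_pt_lim_continuity_pt _ _ _ (dB1 k z)) bA1 bB1 Hz).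
  - exact (sep_series_cont _ _ _ Hab A0 B2 x z
      (fun k y => derivable_pt_lim_continuity_pt _ _ _ (dA0 k y)) cB2 bA0 bB2 Hz).
Qed.

(* Splitting L x^2 = sum of the c_n K n^3 x^2 among the terms makes each term convex. *)
Definition term k x z := c (S k) * (81 ^ 2 / 6 * INR (S k) ^ 3 * x ^ 2 + g_ F (S k) x * h_ (S k) z).

Lemma term_convex k : convex_on_D (term k).
Proof.
  set (a := c (S k) * (81 ^ 2 / 6) * INR (S k) ^ 3).
  apply (convex_on_D_ext (fun x z => a * x ^ 2 * 1 + A0 k x * B0 k z));
    [intros x z _; unfold term, A0, B0, a; ring|].
  apply (separable_sum_convex (fun x => a * x ^ 2) (fun x => 2 * a * x) (fun _ => 2 * a)
     (fun _ => 1) (fun _ => 0) (fun _ => 0) (A0 k) (A1 k) (A2 k) (B0 k) (B1 k) (B2 k));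
    try (intro; apply is_derive_Reals; auto_derive; [trivial | ring]); try apply dA0;
    try apply dA1; try apply dB0; try apply dB1.
  intros x z X Y Hz.
  destruct (gap_range F (S k) (hclosed k) (hsub k) x) as [Hs [Ht Hst]].
  assert (Hw : 0 <= ramp (INR (S k)) z <= INR (S k))
    by (unfold ramp, Rmax; destruct Rle_dec; pose proof (pos_INR (S k)); lra).
  pose proof (term_hessian_nonneg _ _ _ _ X Y Hs Ht Hst Hw) as Hess.
  pose proof (hc k) as Hck.
  unfold A0, A1, A2, B0, B1, B2, h1, h2, g1, g2, a.
  change (h_ (S k) z) with (ramp (INR (S k)) z ^ 3);
    change (g_ F (S k) x) with (P0 (gap_l F (S k) x) (gap_r F (S k) x)).
  match goal with |- 0 <= ?e => replace e with (c (S k) * (2187 * INR (S k) ^ 3 * X ^ 2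
    + X ^ 2 * P2 (gap_l F (S k) x) (gap_r F (S k) x) * ramp (INR (S k)) z ^ 3
    + 2 * X * Y * P1 (gap_l F (S k) x) (gap_r F (S k) x) * (-3 * ramp (INR (S k)) z ^ 2)
    + Y ^ 2 * P0 (gap_l F (S k) x) (gap_r F (S k) x) * (6 * ramp (INR (S k)) z))) by field end.
  apply Rmult_le_pos; lra.
Qed.

Lemma f_series_spec x z : 0 <= z ->
  infinite_sum (fun k => A0 k x * B0 k z) (sep_series A0 B0 x z).
Proof.
  intro Hz; exact (sep_series_spec _ _ _ Hab A0 B0 x z (fun k => bA0 k x) (fun k => bB0 k z Hz)).
Qed.

Lemma f_terms_nonneg k x z : 0 <= A0 k x * B0 k z.
Proof.
  unfold A0, B0; pose proof (hc k); pose proof (g_nonneg F (S k) (hclosed k) (hsub k) x).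
  pose proof (h_nonneg (S k) z); apply Rmult_le_pos; [apply Rmult_le_pos|]; lra.
Qed.

Lemma term_sum x z : 0 <= z ->
  infinite_sum (fun k => term k x z) (x ^ 2 * L + 1 * sep_series A0 B0 x z).
Proof.
  intro Hz; refine (infinite_sum_ext _ _ _ _ _ _
    (infinite_sum_lin _ _ (x ^ 2) 1 _ _ hL (f_series_spec x z Hz)));
    [intro k; unfold term, A0, B0; ring | reflexivity].
Qed.

Lemma f_decomp x z : 0 <= z -> f_ F c x z = (1 - L) * x ^ 2 + series_sum (fun k => term k x z).
Proof. intro Hz; rewrite f_eq, (series_sum_eq _ _ (term_sum x z Hz)); ring. Qed.

Lemma f_convex : convex_on_D (f_ F c).
Proof.
  apply (convex_on_D_ext (fun x z => (1 - L) * x ^ 2 + series_sum (fun k => term k x z)));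
    [intros x z Hz; symmetry; now apply f_decomp|].
  apply convex_on_D_plus; [apply convex_on_D_square; lra|].
  apply convex_on_D_series; [exact term_convex|].
  intros x z Hz; exact (series_sum_spec _ _ (term_sum x z Hz)).
Qed.

Lemma f_ge_sq x z : 0 <= z -> f_ F c x z >= x ^ 2.
Proof.
  intro Hz; rewrite f_eq.
  pose proof (infinite_sum_ge_term _ _ 0 (fun k => f_terms_nonneg k x z) (f_series_spec x z Hz)).
  pose proof (f_terms_nonneg 0 x z); lra.
Qed.

Lemma E_mono n m x : (1 <= n)%nat -> (n <= m)%nat -> E F n x -> E F m x.
Proof.
  intros Hn Hm HE; induction Hm as [|m Hm IH]; [exact HE|].
  destruct IH as [H | [H | [a [Ha ->]]]]; [now left | now right; left|].
  right; right; exists a; split; [apply hFmono; [lia | exact Ha] | reflexivity].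
Qed.

Lemma f_term_pos k x z : z < INR (S k) -> ~ E F (S k) x -> 0 < A0 k x * B0 k z.
Proof.
  intros Hz HE; unfold A0, B0; pose proof (hc k).
  assert (Hh : 0 < h_ (S k) z) by (unfold h_; rewrite Rmax_left by lra; apply pow_lt; lra).
  assert (Hg : 0 < g_ F (S k) x).
  { destruct (g_nonneg F (S k) (hclosed k) (hsub k) x) as [Hg | Hg]; [exact Hg|].
    exfalso; now apply HE, (g_eq_0_iff F (S k) (hclosed k) (hsub k)). }
  apply Rmult_lt_0_compat; [apply Rmult_lt_0_compat|]; assumption.
Qed.

Lemma f_eq_sq_iff x :
  (exists n, (1 <= n)%nat /\ E F n x) <-> (exists z, 0 <= z /\ f_ F c x z = x ^ 2).
Proof.
  split.
  - intros [n [Hn HE]]; exists (INR n); split; [apply pos_INR|].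
    rewrite f_eq; unfold sep_series; rewrite (series_sum_eq _ 0); [ring|].
    refine (infinite_sum_ext _ _ _ _ _ eq_refl infinite_sum_zero); intro k.
    destruct (Compare_dec.le_lt_dec (S k) n) as [Hle | Hlt].
    + unfold B0, h_; rewrite Rmax_right; [simpl; ring|]; apply le_INR in Hle; lra.
    + unfold A0; rewrite (proj2 (g_eq_0_iff F (S k) (hclosed k) (hsub k) x)); [ring|].
      apply (E_mono n); [exact Hn | lia | exact HE].
  - intros [z [Hz Hf]]; rewrite f_eq in Hf; destruct (INR_unbounded z) as [m Hm].
    exists (S m); split; [lia|]; apply NNPP; intro HE.
    pose proof (f_term_pos m x z ltac:(rewrite S_INR; lra) HE).
    pose proof (infinite_sum_ge_term _ _ m (fun k => f_terms_nonneg k x z) (f_series_spec x z Hz)).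
    lra.
Qed.

Lemma f_dz_terms k x z :
  0 <= - (A0 k x * B1 k z) /\ (0 < A0 k x * B0 k z -> 0 < - (A0 k x * B1 k z)).
Proof.
  unfold A0, B0, B1, h1; change (h_ (S k) z) with (ramp (INR (S k)) z ^ 3).
  assert (Ha : 0 <= c (S k) * g_ F (S k) x)
    by (apply Rmult_le_pos; [apply Rlt_le, hc | apply (g_nonneg F (S k) (hclosed k) (hsub k))]).
  assert (Hw : 0 <= ramp (INR (S k)) z) by apply Rmax_r.
  split; [pose proof (pow2_ge_0 (ramp (INR (S k)) z)); nra | intro Hpos; nra].
Qed.

Lemma f_dz_neg x z : 0 <= z -> f_ F c x z > x ^ 2 ->
  exists l, dz_within (f_ F c) x z l /\ l < 0.
Proof.
  intros Hz Hf; exists (sep_series A0 B1 x z); split;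
    [exact (dz_within_of_diff_within _ _ _ _ _ (f_diff x z Hz))|].
  rewrite f_eq in Hf.
  assert (Hpos : exists k, 0 < A0 k x * B0 k z).
  { apply NNPP; intro Hn.
    assert (sep_series A0 B0 x z <= 0); [|lra].
    apply (infinite_sum_le _ _ _ _ (fun k => Rnot_lt_le _ _ (fun H => Hn (ex_intro _ k H)))
      (f_series_spec x z Hz) infinite_sum_zero). }
  destruct Hpos as [k Hk].
  assert (Hsum : infinite_sum (fun j => - (A0 j x * B1 j z)) (-1 * sep_series A0 B1 x z)).
  { refine (infinite_sum_ext _ _ _ _ _ eq_refl (infinite_sum_scal _ (-1) _
      (sep_series_spec _ _ _ Hab A0 B1 x z (fun j => bA0 j x) (fun j => bB1 j z Hz))));
    intro; ring. }
  pose proof (infinite_sum_ge_term _ _ k (fun j => proj1 (f_dz_terms j x z)) Hsum).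
  pose proof (proj2 (f_dz_terms k x z) Hk); lra.
Qed.

End Main.

Theorem lemma6
  (F : nat -> R -> Prop) (c : nat -> R)
  (hFclosed : forall n, (1 <= n)%nat -> closed_set (F n))
  (hFsub : forall n, (1 <= n)%nat -> forall alpha, F n alpha -> 0 <= alpha <= 1)
  (hFmono : forall n, (1 <= n)%nat -> forall alpha, F n alpha -> F (S n) alpha)
  (hcpos : forall n, (1 <= n)%nat -> 0 < c n)
  (hcsum : exists L, infinite_sum
             (fun k => 81 ^ 2 / 6 * INR (S k) ^ 3 * c (S k)) L /\ L < 1) :
  (forall x z, 0 <= z -> f_ F c x z >= x ^ 2) /\
  (C2_on_D (f_ F c) /\ convex_on_D (f_ F c)) /\
  (forall x, (exists n, (1 <= n)%nat /\ E F n x) <->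
             (exists z, 0 <= z /\ f_ F c x z = x ^ 2)) /\
  (forall x z, 0 <= z -> f_ F c x z > x ^ 2 ->
     exists l, dz_within (f_ F c) x z l /\ l < 0).
Proof.
  destruct hcsum as [L [hL hL1]].
  split; [|split; [split|split]].
  - exact (f_ge_sq F c L hFclosed hFsub hcpos hL).
  - exact (f_C2 F c L hFclosed hFsub hcpos hL).
  - exact (f_convex F c L hFclosed hFsub hcpos hL hL1).
  - exact (f_eq_sq_iff F c L hFclosed hFsub hFmono hcpos hL).
  - exact (f_dz_neg F c L hFclosed hFsub hcpos hL).
Qed.
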